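(* Assume Non-Degeneracy Assumption I. Let $(B_1,\dots,B_N;\mathcal{K}_0,\mathcal{J}_0,\mathcal{K}_{N+1},\mathcal{J}_{N+1})$ be a base sequence, and let the boundary values $\mathbf{u}^0,\mathbf{u}^N,x^0,\mathbf{x}^N,\mathbf{p}^0,\mathbf{p}^N,q^N,\mathbf{q}^0$ and interval lengths $\tau_1,\dots,\tau_N$ form a solution of the base-sequence system (a)–(e). Suppose that all boundary values $\mathbf{u}^0,\mathbf{u}^N,x^0,\mathbf{x}^N,\mathbf{p}^0,\mathbf{p}^N,q^N,\mathbf{q}^0$ are $\ge 0$, all $\tau_n\ge 0$, and all breakpoint state values $x^n$ and $q^n$, $n=0,1,\dots,N$, are $\ge 0$. Then the constructed functions $U$ and $P$ are optimal solutions of M-CLP and M-CLP$^*$ respectively.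
   Context: Let $A$ be a real $K\times J$ matrix, $\beta,b\in\mathbb{R}^K$, $\gamma,c\in\mathbb{R}^J$, $T>0$. M-CLP is the problem: maximize $\int_{0-}^T(\gamma+(T-t)c)^\top dU(t)$ (Lebesgue–Stieltjes, the jump $U(0)$ at $0$ included) over $U:[0,T]\to\mathbb{R}^J$ that are nonnegative, non-decreasing and right-continuous with $U(0-)=0$, subject to $AU(t)\le\beta+bt$ for all $0\le t\le T$. Its symmetric dual M-CLP$^*$ is: minimize $\int_{0-}^T(\beta+(T-t)b)^\top dP(t)$ over $P:[0,T]\to\mathbb{R}^K$ nonnegative, non-decreasing, right-continuous with $P(0-)=0$, subject to $A^\top P(t)\ge\gamma+ct$ for all $0\le t\le T$. The primal and dual states (slacks) are $x(t)=\beta+bt-AU(t)$ and $q(t)=A^\top P(t)-\gamma-ct$; the dual is viewed as running in reversed time ($P(T-t)$ corresponds to $U(t)$). Non-Degeneracy Assumption I: $b$ is not a linear combination of fewer than $K$ columns of the matrix $[A\ I]$, and $c$ is not a linear combination of fewer than $J$ columns of $[A^\top\ I]$. Bases (of the Rates-LP). Consider the systems $Au+\dot x=b$ (unknowns $u\in\mathbb{R}^J,\dot x\in\mathbb{R}^K$) and $A^\top p-\dot q=c$ (unknowns $p\in\mathbb{R}^K,\dot q\in\mathbb{R}^J$). A basis $B$ is given by index sets $\mathcal{K}\subseteq\{1,\dots,K\}$, $\mathcal{J}\subseteq\{1,\dots,J\}$ such that the primal basic variables $\dot x_k$ ($k\in\mathcal{K}$) and $u_j$ ($j\notin\mathcal{J}$)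 are $K$ in number with linearly independent columns in $[A\ I]$. Its primal basic solution is the unique solution of $Au+\dot x=b$ with $u_j=0$ ($j\in\mathcal{J}$), $\dot x_k=0$ ($k\notin\mathcal{K}$); its complementary dual basic solution is the unique solution of $A^\top p-\dot q=c$ with $p_k=0$ ($k\in\mathcal{K}$), $\dot q_j=0$ ($j\notin\mathcal{J}$) (dual basic variables $p_k$, $k\notin\mathcal{K}$, and $\dot q_j$, $j\in\mathcal{J}$). $B$ is admissible if $u\ge0$ and $p\ge0$. Bases $B_n,B_{n+1}$ are adjacent if one is obtained from the other by a single pivot: one primal basic variable $v_n$ leaves and one variable $w_n$ enters. Base sequence: an integer $N\ge1$, admissible bases $B_1,\dots,B_N$ with index sets $(\mathcal{K}_n,\mathcal{J}_n)$, $B_n$ and $B_{n+1}$ adjacent for $n=1,\dots,N-1$, with primal/dual basic solutions (rates) $u^n,\dot x^n,p^n,\dot q^n$; together with index sets $\mathcal{K}_0,\mathcal{K}_{N+1}\subseteq\{1,\dots,K\}$, $\mathcal{J}_0,\mathcal{J}_{N+1}\subseteq\{1,\dots,J\}$ satisfying the compatibility conditions $\mathcal{K}_0\subseteq\mathcal{K}_1$ and $\mathcal{J}_{N+1}\subseteq\mathcal{J}_N$. Base-sequence system. Unknowns: $\mathbf{u}^0,\mathbf{u}^N,q^N,\mathbf{q}^0\in\mathbb{R}^J$, $x^0,\mathbf{x}^N,\mathbf{p}^0,\mathbf{p}^N\in\mathbb{R}^K$, $\tau_1,\dots,\tau_N\in\mathbb{R}$. Write $x^n=x^0+\sum_{m=1}^n\dot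 x^m\tau_m$ and $q^n=q^N+\sum_{m=n+1}^N\dot q^m\tau_m$ for $n=0,\dots,N$. Equations: (a) for $n=1,\dots,N-1$: if $v_n=\dot x_k$ then $x^n_k=0$; if $v_n=u_j$ then $q^n_j=0$; (b) $\sum_{n=1}^N\tau_n=T$; (c) $\mathbf{u}^0_j=0$ for $j\in\mathcal{J}_0$, $x^0_k=0$ for $k\notin\mathcal{K}_0$, $\mathbf{p}^0_k=0$ for $k\in\mathcal{K}_0$, $\mathbf{q}^0_j=0$ for $j\notin\mathcal{J}_0$, $\mathbf{p}^N_k=0$ for $k\in\mathcal{K}_{N+1}$, $q^N_j=0$ for $j\notin\mathcal{J}_{N+1}$, $\mathbf{u}^N_j=0$ for $j\in\mathcal{J}_{N+1}$, $\mathbf{x}^N_k=0$ for $k\notin\mathcal{K}_{N+1}$; (d) $A\mathbf{u}^0+x^0=\beta$, $A^\top\mathbf{p}^N-q^N=\gamma$; (e) $A\mathbf{u}^N+\mathbf{x}^N-x^N=0$, $A^\top\mathbf{p}^0-\mathbf{q}^0+q^0=0$. Constructed functions: $t_0=0$, $t_n=\tau_1+\dots+\tau_n$; $u(t)=u^n$ for $t\in(t_{n-1},t_n)$; $U(t)=\mathbf{u}^0+\int_0^tu(s)ds$ for $0\le t<T$, $U(T)=\mathbf{u}^0+\int_0^Tu(s)ds+\mathbf{u}^N$; $p(s)=p^n$ for $s\in(T-t_n,T-t_{n-1})$; $P(s)=\mathbf{p}^N+\int_0^sp(r)dr$ for $0\le s<T$, $P(T)=\mathbf{p}^N+\int_0^Tp(r)dr+\mathbf{p}^0$.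 *)

(* classical reals. Vectors are functions nat -> R (only the
   indices below the relevant dimension matter); a K x J matrix is
   nat -> nat -> R with entries A k j. *)
From Stdlib Require Import Reals.
Open Scope R_scope.

Fixpoint rsum (n : nat) (f : nat -> R) : R :=
  match n with O => 0 | S m => rsum m f + f m end.

Fixpoint cnt (n : nat) (P : nat -> bool) : nat :=
  match n with O => O | S m => (cnt m P + (if P m then 1 else 0))%nat end.

Definition tagged_partition (a b : R) (m : nat) (s xi : nat -> R) (delta : R) : Prop :=
  s O = a /\ s m = b /\
  (forall i, (i < m)%nat -> s i <= xi i <= s (S i) /\ s (S i) - s i < delta).

Definition RS_sum (n : nat) (f F : R -> nat -> R) (m : nat) (s xi : nat -> R) : R :=
  rsum m (fun i => rsum n (fun j => f (xi i) j * (F (s (S i)) j - F (s i) j))).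

Definition RS_int (n : nat) (f F : R -> nat -> R) (a b I : R) : Prop :=
  forall eps, eps > 0 -> exists delta, delta > 0 /\
    forall m s xi, tagged_partition a b m s xi delta ->
      Rabs (RS_sum n f F m s xi - I) < eps.

(* I = int_{0-}^T f(t)^T dF(t), with F(0-) = 0, i.e. the jump F(0) at 0 is
   included: I = f(0)^T F(0) + RS-int over [0,T]. *)
Definition LS_int0 (n : nat) (f F : R -> nat -> R) (T I : R) : Prop :=
  exists I0, RS_int n f F 0 T I0 /\ I = rsum n (fun j => f 0 j * F 0 j) + I0.

Definition nonneg_on (n : nat) (T : R) (F : R -> nat -> R) : Prop :=
  forall t j, 0 <= t <= T -> (j < n)%nat -> 0 <= F t j.

Definition nondecr_on (n : nat) (T : R) (F : R -> nat -> R) : Prop :=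
  forall t1 t2 j, 0 <= t1 -> t1 <= t2 -> t2 <= T -> (j < n)%nat -> F t1 j <= F t2 j.

Definition rcont_on (n : nat) (T : R) (F : R -> nat -> R) : Prop :=
  forall t j, 0 <= t < T -> (j < n)%nat ->
    forall eps, eps > 0 -> exists delta, delta > 0 /\
      forall t', t <= t' < t + delta -> t' <= T -> Rabs (F t' j - F t j) < eps.

Definition MCLP_feasible (K J : nat) (A : nat -> nat -> R) (beta b : nat -> R)
  (T : R) (U : R -> nat -> R) : Prop :=
  nonneg_on J T U /\ nondecr_on J T U /\ rcont_on J T U /\
  (forall t k, 0 <= t <= T -> (k < K)%nat ->
     rsum J (fun j => A k j * U t j) <= beta k + b k * t).

Definition MCLP_value (J : nat) (gamma c : nat -> R) (T : R) (U : R -> nat -> R) (I : R) : Prop :=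
  LS_int0 J (fun t j => gamma j + (T - t) * c j) U T I.

Definition MCLP_optimal (K J : nat) (A : nat -> nat -> R) (beta b gamma c : nat -> R)
  (T : R) (U : R -> nat -> R) : Prop :=
  MCLP_feasible K J A beta b T U /\
  exists I, MCLP_value J gamma c T U I /\
    forall U' I', MCLP_feasible K J A beta b T U' -> MCLP_value J gamma c T U' I' -> I' <= I.

Definition MCLPd_feasible (K J : nat) (A : nat -> nat -> R) (gamma c : nat -> R)
  (T : R) (P : R -> nat -> R) : Prop :=
  nonneg_on K T P /\ nondecr_on K T P /\ rcont_on K T P /\
  (forall t j, 0 <= t <= T -> (j < J)%nat ->
     rsum K (fun k => A k j * P t k) >= gamma j + c j * t).

Definition MCLPd_value (K : nat) (beta b : nat -> R) (T : R) (P : R -> nat -> R) (I : R) : Prop :=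
  LS_int0 K (fun t k => beta k + (T - t) * b k) P T I.

Definition MCLPd_optimal (K J : nat) (A : nat -> nat -> R) (beta b gamma c : nat -> R)
  (T : R) (P : R -> nat -> R) : Prop :=
  MCLPd_feasible K J A gamma c T P /\
  exists I, MCLPd_value K beta b T P I /\
    forall P' I', MCLPd_feasible K J A gamma c T P' -> MCLPd_value K beta b T P' I' -> I <= I'.

Definition nondegenerate_I (K J : nat) (A : nat -> nat -> R) (b c : nat -> R) : Prop :=
  (* b is not a linear combination of fewer than K columns of [A I] *)
  (forall (Su Sx : nat -> bool), (cnt J Su + cnt K Sx < K)%nat ->
     forall (u xd : nat -> R),
       (forall j, (j < J)%nat -> Su j = false -> u j = 0) ->
       (forall k, (k < K)%nat -> Sx k = false -> xd k = 0) ->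
       ~ (forall k, (k < K)%nat -> rsum J (fun j => A k j * u j) + xd k = b k)) /\
  (* c is not a linear combination of fewer than J columns of [A^T I] *)
  (forall (Sp Sq : nat -> bool), (cnt K Sp + cnt J Sq < J)%nat ->
     forall (p qd : nat -> R),
       (forall k, (k < K)%nat -> Sp k = false -> p k = 0) ->
       (forall j, (j < J)%nat -> Sq j = false -> qd j = 0) ->
       ~ (forall j, (j < J)%nat -> rsum K (fun k => A k j * p k) + qd j = c j)).

(* Bases of the Rates-LP.  A basis is given by index sets Ks (the k with
   xdot_k basic) and Js (the j with u_j NON-basic), as boolean predicates
   (only indices < K, resp. < J, matter).                             *)

Definition is_basis (K J : nat) (A : nat -> nat -> R) (Ks Js : nat -> bool) : Prop :=
  (cnt K Ks + (J - cnt J Js) = K)%nat /\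
  (* the basic columns of [A I] are linearly independent *)
  (forall u xd : nat -> R,
     (forall j, (j < J)%nat -> Js j = true -> u j = 0) ->
     (forall k, (k < K)%nat -> Ks k = false -> xd k = 0) ->
     (forall k, (k < K)%nat -> rsum J (fun j => A k j * u j) + xd k = 0) ->
     (forall j, (j < J)%nat -> u j = 0) /\ (forall k, (k < K)%nat -> xd k = 0)).

Definition primal_basic_sol (K J : nat) (A : nat -> nat -> R) (b : nat -> R)
  (Ks Js : nat -> bool) (u xd : nat -> R) : Prop :=
  (forall k, (k < K)%nat -> rsum J (fun j => A k j * u j) + xd k = b k) /\
  (forall j, (j < J)%nat -> Js j = true -> u j = 0) /\
  (forall k, (k < K)%nat -> Ks k = false -> xd k = 0).

Definition dual_basic_sol (K J : nat) (A : nat -> nat -> R) (c : nat -> R)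
  (Ks Js : nat -> bool) (p qd : nat -> R) : Prop :=
  (forall j, (j < J)%nat -> rsum K (fun k => A k j * p k) - qd j = c j) /\
  (forall k, (k < K)%nat -> Ks k = true -> p k = 0) /\
  (forall j, (j < J)%nat -> Js j = false -> qd j = 0).

Definition admissible (K J : nat) (u p : nat -> R) : Prop :=
  (forall j, (j < J)%nat -> 0 <= u j) /\ (forall k, (k < K)%nat -> 0 <= p k).

(* primal variables: xdot_k or u_j *)
Inductive pvar : Type := VX (k : nat) | VU (j : nat).

Definition is_basic (K J : nat) (Ks Js : nat -> bool) (v : pvar) : Prop :=
  match v with
  | VX k => (k < K)%nat /\ Ks k = true
  | VU j => (j < J)%nat /\ Js j = false
  end.

Definition in_range (K J : nat) (v : pvar) : Prop :=
  match v with VX k => (k < K)%nat | VU j => (j < J)%nat end.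

Definition pivot (K J : nat) (Ks1 Js1 Ks2 Js2 : nat -> bool) (v : pvar) : Prop :=
  is_basic K J Ks1 Js1 v /\ ~ is_basic K J Ks2 Js2 v /\
  exists w, in_range K J w /\ ~ is_basic K J Ks1 Js1 w /\ is_basic K J Ks2 Js2 w /\
    forall y, in_range K J y -> y <> v -> y <> w ->
      (is_basic K J Ks1 Js1 y <-> is_basic K J Ks2 Js2 y).

(* Base sequence B_1..B_N (indices n = 1..N of the families Ks, Js, u, xd,
   p, qd), with leaving variables v n (n = 1..N-1), and boundary index
   sets K0, J0, KN1 (= K_{N+1}), JN1 (= J_{N+1}). *)
Definition base_sequence (K J : nat) (A : nat -> nat -> R) (b c : nat -> R) (N : nat)
  (Ks Js : nat -> nat -> bool) (u xd p qd : nat -> nat -> R) (v : nat -> pvar)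
  (K0 J0 KN1 JN1 : nat -> bool) : Prop :=
  (1 <= N)%nat /\
  (forall n, (1 <= n <= N)%nat ->
     is_basis K J A (Ks n) (Js n) /\
     primal_basic_sol K J A b (Ks n) (Js n) (u n) (xd n) /\
     dual_basic_sol K J A c (Ks n) (Js n) (p n) (qd n) /\
     admissible K J (u n) (p n)) /\
  (forall n, (1 <= n <= N - 1)%nat ->
     pivot K J (Ks n) (Js n) (Ks (S n)) (Js (S n)) (v n)) /\
  (forall k, (k < K)%nat -> K0 k = true -> Ks 1%nat k = true) /\
  (forall j, (j < J)%nat -> JN1 j = true -> Js N j = true).

Definition xstate (x0 : nat -> R) (xd : nat -> nat -> R) (tau : nat -> R) (n k : nat) : R :=
  x0 k + rsum n (fun i => xd (S i) k * tau (S i)).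

Definition qstate (N : nat) (qN : nat -> R) (qd : nat -> nat -> R) (tau : nat -> R) (n j : nat) : R :=
  qN j + rsum (N - n) (fun i => qd (S n + i)%nat j * tau (S n + i)%nat).

Definition bs_system (K J : nat) (A : nat -> nat -> R) (beta gamma : nat -> R) (T : R)
  (N : nat) (xd qd : nat -> nat -> R) (v : nat -> pvar) (K0 J0 KN1 JN1 : nat -> bool)
  (U0 UN x0 XN P0 PN qN Q0 tau : nat -> R) : Prop :=
  (forall n, (1 <= n <= N - 1)%nat ->
     (forall k, v n = VX k -> xstate x0 xd tau n k = 0) /\
     (forall j, v n = VU j -> qstate N qN qd tau n j = 0)) /\
  rsum N (fun i => tau (S i)) = T /\
  (forall j, (j < J)%nat -> J0 j = true -> U0 j = 0) /\
  (forall k, (k < K)%nat -> K0 k = false -> x0 k = 0) /\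
  (forall k, (k < K)%nat -> K0 k = true -> P0 k = 0) /\
  (forall j, (j < J)%nat -> J0 j = false -> Q0 j = 0) /\
  (forall k, (k < K)%nat -> KN1 k = true -> PN k = 0) /\
  (forall j, (j < J)%nat -> JN1 j = false -> qN j = 0) /\
  (forall j, (j < J)%nat -> JN1 j = true -> UN j = 0) /\
  (forall k, (k < K)%nat -> KN1 k = false -> XN k = 0) /\
  (forall k, (k < K)%nat -> rsum J (fun j => A k j * U0 j) + x0 k = beta k) /\
  (forall j, (j < J)%nat -> rsum K (fun k => A k j * PN k) - qN j = gamma j) /\
  (forall k, (k < K)%nat -> rsum J (fun j => A k j * UN j) + XN k - xstate x0 xd tau N k = 0) /\
  (forall j, (j < J)%nat -> rsum K (fun k => A k j * P0 k) - Q0 j + qstate N qN qd tau 0 j = 0).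

Definition tpt (tau : nat -> R) (n : nat) : R := rsum n (fun i => tau (S i)).

(* length of the interval (a,b) /\ (0,s)  (= int_0^s of the indicator of (a,b)) *)
Definition overlap (a b s : R) : R := Rmax 0 (Rmin b s - Rmax a 0).

(* U(t) = U0 + int_0^t u(s) ds for t < T, plus the final jump UN at T,
   where u = u^n on (t_{n-1}, t_n). *)
Definition Ucons (T : R) (N : nat) (u : nat -> nat -> R) (tau U0 UN : nat -> R)
  (t : R) (j : nat) : R :=
  U0 j + rsum N (fun i => u (S i) j * overlap (tpt tau i) (tpt tau (S i)) t)
  + (if Rlt_dec t T then 0 else UN j).

(* P(s) = PN + int_0^s p(r) dr for s < T, plus P0 at T,
   where p = p^n on (T - t_n, T - t_{n-1}). *)
Definition Pcons (T : R) (N : nat) (p : nat -> nat -> R) (tau PN P0 : nat -> R)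
  (s : R) (k : nat) : R :=
  PN k + rsum N (fun i => p (S i) k * overlap (T - tpt tau (S i)) (T - tpt tau i) s)
  + (if Rlt_dec s T then 0 else P0 k).

From Stdlib Require Import Reals Lra Lia Classical.
Open Scope R_scope.

(* Take a partition of [0,T], the primal Riemann-Stieltjes sum on it and the
   dual one on the reversed partition.  Summation by parts shows that the dual
   sum exceeds the primal one by exactly two complementary-slackness sums,
   [sum q dU] and [sum x dP].  For any feasible pair both are nonnegative,
   which is weak duality.  For the constructed pair they vanish on every
   partition refining the breakpoints [t_n]: on [(t_(n-1), t_n)] a rate that
   is basic in [B_n] faces a state that the pivots (equation (a)) have driven
   to zero, and the jumps at [0] and [T] are complementary by (c).  So the two
   objective values coincide, and both functions are optimal.  Feasibility
   holds because [x] and [q] are affine between breakpoints and nonnegative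
   at them. *)

(** * Finite sums *)

Lemma rsum_ext n f g : (forall i, (i < n)%nat -> f i = g i) -> rsum n f = rsum n g.
Proof.
  induction n as [|n IH]; intros H; simpl; auto.
  rewrite IH by (intros; apply H; lia). rewrite H by lia. reflexivity.
Qed.

Lemma rsum_plus n f g : rsum n (fun i => f i + g i) = rsum n f + rsum n g.
Proof. induction n as [|n IH]; simpl; [lra|]. rewrite IH; lra. Qed.

Lemma rsum_minus n f g : rsum n (fun i => f i - g i) = rsum n f - rsum n g.
Proof. induction n as [|n IH]; simpl; [lra|]. rewrite IH; lra. Qed.

Lemma rsum_scal n a f : rsum n (fun i => a * f i) = a * rsum n f.
Proof. induction n as [|n IH]; simpl; [lra|]. rewrite IH; lra. Qed.

Lemma rsum_eq0 n f : (forall i, (i < n)%nat -> f i = 0) -> rsum n f = 0.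
Proof.
  intros H. rewrite (rsum_ext n f (fun _ => 0)) by auto.
  clear H. induction n; simpl; lra.
Qed.

Lemma rsum_swap a b (F : nat -> nat -> R) :
  rsum a (fun i => rsum b (fun j => F i j)) = rsum b (fun j => rsum a (fun i => F i j)).
Proof.
  induction a as [|a IH]; simpl.
  - symmetry; apply rsum_eq0; auto.
  - rewrite IH, <- rsum_plus. reflexivity.
Qed.

Lemma rsum_Sl m F : rsum (S m) F = F 0%nat + rsum m (fun i => F (S i)).
Proof. induction m as [|m IH]; simpl in *; [lra|]. rewrite IH; lra. Qed.

Lemma rsum_split a b F : rsum (a + b) F = rsum a F + rsum b (fun i => F (a + i)%nat).
Proof.
  induction b as [|b IH]; simpl.
  - rewrite Nat.add_0_r; lra.
  - rewrite Nat.add_succ_r; simpl. rewrite IH; lra.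
Qed.

Lemma rsum_rev m F : rsum m (fun l => F (m - S l)%nat) = rsum m F.
Proof.
  induction m as [|m IH]; [reflexivity|].
  rewrite rsum_Sl. simpl (S m - 1)%nat. rewrite Nat.sub_0_r.
  rewrite (rsum_ext m _ (fun l => F (m - S l)%nat)) by (intros; f_equal; lia).
  rewrite IH. simpl. lra.
Qed.

Lemma rsum_nonneg n f : (forall i, (i < n)%nat -> 0 <= f i) -> 0 <= rsum n f.
Proof.
  induction n as [|n IH]; simpl; intros H; [lra|].
  assert (0 <= f n) by (apply H; lia).
  assert (0 <= rsum n f) by (apply IH; intros; apply H; lia). lra.
Qed.

Lemma rsum_le n f g : (forall i, (i < n)%nat -> f i <= g i) -> rsum n f <= rsum n g.
Proof.
  induction n as [|n IH]; simpl; intros H; [lra|].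
  assert (f n <= g n) by (apply H; lia).
  assert (rsum n f <= rsum n g) by (apply IH; intros; apply H; lia). lra.
Qed.

Lemma rsum_abs n f : Rabs (rsum n f) <= rsum n (fun i => Rabs (f i)).
Proof.
  induction n as [|n IH]; simpl; [rewrite Rabs_R0; lra|].
  eapply Rle_trans; [apply Rabs_triang|]. lra.
Qed.

Lemma rsum_telescope m (H : nat -> R) : rsum m (fun i => H (S i) - H i) = H m - H 0%nat.
Proof. induction m as [|m IH]; simpl; [lra|]. rewrite IH; lra. Qed.

Lemma summation_by_parts m (a y : nat -> R) :
  a 0%nat * y 0%nat + rsum m (fun i => a (S i) * (y (S i) - y i)) =
  rsum m (fun i => (a i - a (S i)) * y i) + a m * y m.
Proof. induction m as [|m IH]; simpl; [ring|]. lra. Qed.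

Lemma rsum_bilinear K J (A : nat -> nat -> R) (P w : nat -> R) :
  rsum J (fun j => rsum K (fun k => A k j * P k) * w j) =
  rsum K (fun k => P k * rsum J (fun j => A k j * w j)).
Proof.
  rewrite (rsum_ext J _ (fun j => rsum K (fun k => A k j * P k * w j))).
  2:{ intros. rewrite Rmult_comm, <- rsum_scal. apply rsum_ext; intros; ring. }
  rewrite rsum_swap. apply rsum_ext; intros. rewrite <- rsum_scal. apply rsum_ext; intros; ring.
Qed.

Lemma scaled_eps_lt eps X : eps > 0 -> 0 <= X -> X * (eps / (X + 1)) < eps.
Proof.
  intros He HX.
  replace (X * (eps / (X + 1))) with (eps * (X / (X + 1))) by (field; lra).
  assert (X / (X + 1) < 1).
  { apply (Rmult_lt_reg_r (X + 1)); [lra|]. unfold Rdiv. rewrite Rmult_assoc, Rinv_l by lra. lra. }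
  assert (0 <= X / (X + 1)) by (unfold Rdiv; apply Rmult_le_pos; [lra| left; apply Rinv_0_lt_compat; lra]).
  nra.
Qed.

Ltac destruct_minmax := unfold overlap, Rmax, Rmin in *; repeat match goal with
  | |- context [Rle_dec ?x ?y] => destruct (Rle_dec x y)
  | H : context [Rle_dec ?x ?y] |- _ => destruct (Rle_dec x y) end.

Lemma overlap_ge0 a b s : 0 <= overlap a b s.
Proof. destruct_minmax; lra. Qed.

Lemma overlap_mono a b s s' : s <= s' -> overlap a b s <= overlap a b s'.
Proof. intros; destruct_minmax; lra. Qed.

Lemma overlap_lipschitz a b s s' : Rabs (overlap a b s' - overlap a b s) <= Rabs (s' - s).
Proof. unfold Rabs; repeat destruct Rcase_abs; destruct_minmax; lra. Qed.

Lemma overlap_full a b s : 0 <= a <= b -> b <= s -> overlap a b s = b - a.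
Proof. intros; destruct_minmax; lra. Qed.

Lemma overlap_partial a b s : 0 <= a -> a <= s <= b -> overlap a b s = s - a.
Proof. intros; destruct_minmax; lra. Qed.

Lemma overlap_empty a b s : 0 <= a -> s <= a -> overlap a b s = 0.
Proof. intros; destruct_minmax; lra. Qed.

Definition clamp (a b t : R) : R := Rmax a (Rmin b t).

Lemma overlap_clamp a b s : 0 <= a <= b -> overlap a b s = clamp a b s - a.
Proof. intros; unfold clamp; destruct_minmax; lra. Qed.

Lemma clamp_step a b s s' : 0 <= a <= b -> s <= s' ->
  clamp a b s = clamp a b s' \/ (s <= clamp a b s <= clamp a b s' /\ clamp a b s' <= s').
Proof. intros; unfold clamp; destruct_minmax; lra. Qed.

Lemma clamp_left a b : 0 <= a <= b -> clamp a b 0 = a.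
Proof. intros; unfold clamp; destruct_minmax; lra. Qed.

Lemma clamp_right a b T : b <= T -> a <= b -> clamp a b T = b.
Proof. intros; unfold clamp; destruct_minmax; lra. Qed.

(* [Ucons] and [Pcons] both unfold to instances of [pwl]. *)
Definition pwl (T : R) (N : nat) (g : nat -> nat -> R) (a b F0 F1 : nat -> R)
  (t : R) (j : nat) : R :=
  F0 j + rsum N (fun i => g (S i) j * overlap (a i) (b i) t) + (if Rlt_dec t T then 0 else F1 j).

Lemma pwl_nonneg n T N g a b F0 F1 :
  (forall i j, (1 <= i <= N)%nat -> (j < n)%nat -> 0 <= g i j) ->
  (forall j, (j < n)%nat -> 0 <= F0 j /\ 0 <= F1 j) ->
  nonneg_on n T (pwl T N g a b F0 F1).
Proof.
  intros Hg HF t j Ht Hj. unfold pwl.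
  assert (0 <= rsum N (fun i => g (S i) j * overlap (a i) (b i) t)).
  { apply rsum_nonneg; intros. apply Rmult_le_pos; [apply Hg; lia| apply overlap_ge0]. }
  destruct (HF j Hj). destruct (Rlt_dec t T); lra.
Qed.

Lemma pwl_nondecr n T N g a b F0 F1 :
  (forall i j, (1 <= i <= N)%nat -> (j < n)%nat -> 0 <= g i j) ->
  (forall j, (j < n)%nat -> 0 <= F0 j /\ 0 <= F1 j) ->
  nondecr_on n T (pwl T N g a b F0 F1).
Proof.
  intros Hg HF t1 t2 j H1 H12 H2 Hj. unfold pwl.
  assert (rsum N (fun i => g (S i) j * overlap (a i) (b i) t1) <=
          rsum N (fun i => g (S i) j * overlap (a i) (b i) t2)).
  { apply rsum_le; intros.
    apply Rmult_le_compat_l; [apply Hg; lia| apply overlap_mono; lra]. }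
  destruct (HF j Hj). destruct (Rlt_dec t1 T); destruct (Rlt_dec t2 T); lra.
Qed.

Lemma pwl_rcont n T N g a b F0 F1 : rcont_on n T (pwl T N g a b F0 F1).
Proof.
  intros t j Ht Hj eps Heps.
  set (L := rsum N (fun i => Rabs (g (S i) j))).
  assert (HL : 0 <= L) by (apply rsum_nonneg; intros; apply Rabs_pos).
  exists (Rmin (T - t) (eps / (L + 1))). split.
  { apply Rmin_glb_lt; [lra| apply Rdiv_lt_0_compat; lra]. }
  intros t' Ht' HtT.
  pose proof (Rmin_l (T - t) (eps / (L + 1))).
  pose proof (Rmin_r (T - t) (eps / (L + 1))).
  unfold pwl. destruct (Rlt_dec t' T); [|lra]. destruct (Rlt_dec t T); [|lra].
  replace (F0 j + rsum N (fun i => g (S i) j * overlap (a i) (b i) t') + 0 -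
     (F0 j + rsum N (fun i => g (S i) j * overlap (a i) (b i) t) + 0))
    with (rsum N (fun i => g (S i) j * (overlap (a i) (b i) t' - overlap (a i) (b i) t)))
    by (rewrite (rsum_ext N _ _ (fun i _ => Rmult_minus_distr_l _ _ _)), rsum_minus; ring).
  eapply Rle_lt_trans; [apply rsum_abs|].
  apply Rle_lt_trans with (rsum N (fun i => (t' - t) * Rabs (g (S i) j))).
  { apply rsum_le; intros. rewrite Rabs_mult, (Rmult_comm (t' - t)).
    apply Rmult_le_compat_l; [apply Rabs_pos|].
    eapply Rle_trans; [apply overlap_lipschitz|]. rewrite Rabs_right; lra. }
  rewrite rsum_scal. fold L.
  assert ((t' - t) * L <= eps / (L + 1) * L) by (apply Rmult_le_compat_r; lra).
  pose proof (scaled_eps_lt eps L Heps HL). lra.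
Qed.

(** * Riemann-Stieltjes integrals *)

Lemma partition_mono a b m s xi d : tagged_partition a b m s xi d ->
  forall i j, (i <= j <= m)%nat -> s i <= s j.
Proof.
  intros [_ [_ H]] i j [Hij Hjm].
  induction j as [|j IH].
  - replace i with 0%nat by lia. lra.
  - destruct (Nat.eq_dec i (S j)) as [->|]; [lra|].
    assert (s i <= s j) by (apply IH; lia).
    destruct (H j ltac:(lia)) as [[? ?] _]. lra.
Qed.

Lemma partition_range T m s xi d : tagged_partition 0 T m s xi d ->
  forall i, (i <= m)%nat -> 0 <= s i <= T.
Proof.
  intros Hp i Hi. pose proof (partition_mono _ _ _ _ _ _ Hp) as M.
  destruct Hp as [H0 [Hm _]].
  split; [rewrite <- H0; apply M; lia| rewrite <- Hm; apply M; lia].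
Qed.

Lemma tagged_partition_weaken a b m s xi d d' : d <= d' ->
  tagged_partition a b m s xi d -> tagged_partition a b m s xi d'.
Proof.
  intros Hd [H0 [H1 H]]. split; [|split]; auto.
  intros i Hi; destruct (H i Hi); split; auto; lra.
Qed.

Lemma reverse_partition T m s d : tagged_partition 0 T m s (fun i => s (S i)) d ->
  tagged_partition 0 T m (fun l => T - s (m - l)%nat) (fun l => T - s (m - S l)%nat) d.
Proof.
  intros [H0 [Hm H]]. split; [|split].
  - rewrite Nat.sub_0_r, Hm; ring.
  - rewrite Nat.sub_diag, H0; ring.
  - intros l Hl. destruct (H (m - S l)%nat ltac:(lia)) as [[? ?] ?].
    replace (m - l)%nat with (S (m - S l)) by lia. lra.
Qed.

Lemma uniform_partition T d : T > 0 -> d > 0 ->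
  exists m s, tagged_partition 0 T m s (fun i => s (S i)) d.
Proof.
  intros HT Hd. destruct (archimed_cor1 (d / T)) as [m [Hm Hm0]].
  { apply Rdiv_lt_0_compat; lra. }
  assert (HmR : 0 < INR m) by (apply lt_0_INR; lia).
  exists m, (fun i => T * INR i / INR m). split; [|split].
  - simpl. unfold Rdiv; ring.
  - field. lra.
  - intros i Hi. rewrite S_INR.
    assert (T / INR m < d).
    { apply (Rmult_lt_reg_r (/ T)); [apply Rinv_0_lt_compat; lra|].
      replace (T / INR m * / T) with (/ INR m) by (field; lra). exact Hm. }
    assert (0 < T / INR m) by (apply Rdiv_lt_0_compat; lra).
    replace (T * (INR i + 1) / INR m) with (T * INR i / INR m + T / INR m) by (field; lra).
    lra.
Qed.

Lemma Rabs_sum_lt_half x1 x2 I1 I2 eps :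
  Rabs (x1 - I1) < eps / 2 -> Rabs (x2 - I2) < eps / 2 -> Rabs (x1 + x2 - (I1 + I2)) < eps.
Proof.
  intros H1 H2. replace (x1 + x2 - (I1 + I2)) with ((x1 - I1) + (x2 - I2)) by ring.
  pose proof (Rabs_triang (x1 - I1) (x2 - I2)). lra.
Qed.

Definition RS_int1 (f F : R -> R) (T I : R) : Prop :=
  forall eps, eps > 0 -> exists delta, delta > 0 /\
    forall m s xi, tagged_partition 0 T m s xi delta ->
      Rabs (rsum m (fun i => f (xi i) * (F (s (S i)) - F (s i))) - I) < eps.

Lemma RS_int1_const f F0 T : RS_int1 f (fun _ => F0) T 0.
Proof.
  intros eps Heps. exists 1. split; [lra|]. intros.
  rewrite rsum_eq0 by (intros; ring). rewrite Rminus_0_r, Rabs_R0; lra.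
Qed.

Lemma RS_int1_add f F1 F2 T I1 I2 :
  RS_int1 f F1 T I1 -> RS_int1 f F2 T I2 -> RS_int1 f (fun t => F1 t + F2 t) T (I1 + I2).
Proof.
  intros H1 H2 eps Heps.
  destruct (H1 (eps/2) ltac:(lra)) as [d1 [Hd1 R1]].
  destruct (H2 (eps/2) ltac:(lra)) as [d2 [Hd2 R2]].
  exists (Rmin d1 d2). split; [apply Rmin_glb_lt; auto|].
  intros m s xi Hp.
  specialize (R1 m s xi (tagged_partition_weaken _ _ _ _ _ _ _ (Rmin_l d1 d2) Hp)).
  specialize (R2 m s xi (tagged_partition_weaken _ _ _ _ _ _ _ (Rmin_r d1 d2) Hp)).
  rewrite (rsum_ext m _ (fun i => f (xi i) * (F1 (s (S i)) - F1 (s i)) +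
                                  f (xi i) * (F2 (s (S i)) - F2 (s i)))) by (intros; ring).
  rewrite rsum_plus.
  exact (Rabs_sum_lt_half _ _ _ _ _ R1 R2).
Qed.

Lemma RS_int1_scal f F T I a : RS_int1 f F T I -> RS_int1 f (fun t => a * F t) T (a * I).
Proof.
  intros H eps Heps.
  pose proof (Rabs_pos a).
  destruct (H (eps / (Rabs a + 1))) as [d [Hd Hs]]; [apply Rdiv_lt_0_compat; lra|].
  exists d; split; auto. intros m s xi Hp. specialize (Hs m s xi Hp).
  rewrite (rsum_ext m _ (fun i => a * (f (xi i) * (F (s (S i)) - F (s i))))) by (intros; ring).
  rewrite rsum_scal, <- Rmult_minus_distr_l, Rabs_mult.
  apply Rle_lt_trans with (Rabs a * (eps / (Rabs a + 1))).
  - apply Rmult_le_compat_l; lra.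
  - apply scaled_eps_lt; lra.
Qed.

Lemma RS_int1_rsum f T N (G : nat -> R -> R) (I : nat -> R) :
  (forall i, (i < N)%nat -> RS_int1 f (G i) T (I i)) ->
  RS_int1 f (fun t => rsum N (fun i => G i t)) T (rsum N I).
Proof.
  induction N as [|N IH]; intros H; simpl.
  - apply RS_int1_const.
  - apply RS_int1_add; [apply IH; intros; apply H; lia| apply H; lia].
Qed.

Lemma RS_int1_ext f F F' T I :
  RS_int1 f F T I -> (forall t, 0 <= t <= T -> F t = F' t) -> RS_int1 f F' T I.
Proof.
  intros H E eps Heps. destruct (H eps Heps) as [d [Hd Hs]]. exists d; split; auto.
  intros m s xi Hp. rewrite (rsum_ext m _ (fun i => f (xi i) * (F (s (S i)) - F (s i)))).
  - apply Hs; auto.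
  - intros i Hi. rewrite !E; auto; apply (partition_range T m s xi d Hp); lia.
Qed.

Lemma telescoping_estimate m (s : nat -> R) (term : nat -> R) (H W : R -> R) (L : R) :
  (forall i, (i < m)%nat ->
     Rabs (term i - (H (s (S i)) - H (s i))) <= L * (W (s (S i)) - W (s i))) ->
  Rabs (rsum m term - (H (s m) - H (s 0%nat))) <= L * (W (s m) - W (s 0%nat)).
Proof.
  intros Hb. rewrite <- (rsum_telescope m (fun i => H (s i))), <- (rsum_telescope m (fun i => W (s i))).
  rewrite <- rsum_minus. eapply Rle_trans; [apply rsum_abs|].
  rewrite <- rsum_scal. apply rsum_le; auto.
Qed.

(* Telescoping against the antiderivative [G] of [f], evaluated at [clamp a b]. *)
Lemma RS_int1_overlap f al be T a b : (forall t, f t = al + be * t) ->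
  0 <= a -> a <= b -> b <= T ->
  RS_int1 f (overlap a b) T ((al * b + be * b * b / 2) - (al * a + be * a * a / 2)).
Proof.
  intros Hf Ha Hab HbT eps Heps.
  set (G := fun y => al * y + be * y * y / 2).
  set (L := Rabs be * (b - a)).
  assert (HL : 0 <= L) by (apply Rmult_le_pos; [apply Rabs_pos|lra]).
  set (d := eps / (L + 1)).
  assert (Hd : 0 < d) by (apply Rdiv_lt_0_compat; lra).
  exists d. split; [exact Hd|].
  intros m s xi Hp. pose proof (partition_range _ _ _ _ _ Hp) as Rg.
  destruct Hp as [H0 [Hm Hpt]].
  assert (Est : Rabs (rsum m (fun i => f (xi i) * (overlap a b (s (S i)) - overlap a b (s i))) -
     (G (clamp a b (s m)) - G (clamp a b (s 0%nat)))) <=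
     Rabs be * d * (clamp a b (s m) - clamp a b (s 0%nat))).
  { apply (telescoping_estimate m s _ (fun t => G (clamp a b t)) (clamp a b)).
    intros i Hi. destruct (Hpt i Hi) as [[Hx1 Hx2] Hdl].
    assert (R1 := Rg i ltac:(lia)). assert (R2 := Rg (S i) ltac:(lia)).
    rewrite !(overlap_clamp a b), Hf by lra. unfold G.
    destruct (clamp_step a b (s i) (s (S i)) ltac:(lra) ltac:(lra)) as [Heq | [Hy1 Hy2]].
    - rewrite Heq, Rminus_diag, Rmult_0_r, Rminus_diag, Rminus_diag, Rabs_R0. lra.
    - set (y := clamp a b (s i)) in *. set (y' := clamp a b (s (S i))) in *.
      replace ((al + be * xi i) * (y' - a - (y - a)) - (al * y' + be * y' * y' / 2 - (al * y + be * y * y / 2)))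
        with ((y' - y) * (be * (xi i - (y + y') / 2))) by field.
      rewrite Rabs_mult, Rabs_mult, (Rabs_right (y' - y)) by lra.
      assert (Rabs (xi i - (y + y') / 2) <= d) by (apply Rabs_le; lra).
      assert (Rabs be * Rabs (xi i - (y + y') / 2) <= Rabs be * d)
        by (apply Rmult_le_compat_l; [apply Rabs_pos|lra]).
      nra. }
  rewrite H0, Hm, clamp_left, clamp_right in Est by lra. unfold G in Est.
  eapply Rle_lt_trans; [exact Est|].
  replace (Rabs be * d * (b - a)) with (L * d) by (unfold L; ring).
  apply scaled_eps_lt; lra.
Qed.

Definition jump_at (T t : R) : R := if Rlt_dec t T then 0 else 1.

Lemma RS_int1_jump f al be T : (forall t, f t = al + be * t) -> T > 0 ->
  RS_int1 f (jump_at T) T (f T).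
Proof.
  intros Hf HT eps Heps.
  pose proof (Rabs_pos be) as Hbe.
  set (d := eps / (Rabs be + 1)).
  assert (Hd : 0 < d) by (apply Rdiv_lt_0_compat; lra).
  exists d. split; [exact Hd|].
  intros m s xi Hp. pose proof (partition_range _ _ _ _ _ Hp) as Rg.
  destruct Hp as [H0 [Hm Hpt]].
  assert (Est : Rabs (rsum m (fun i => f (xi i) * (jump_at T (s (S i)) - jump_at T (s i))) -
     (f T * jump_at T (s m) - f T * jump_at T (s 0%nat))) <=
     Rabs be * d * (jump_at T (s m) - jump_at T (s 0%nat))).
  { apply (telescoping_estimate m s _ (fun t => f T * jump_at T t) (jump_at T)).
    intros i Hi. destruct (Hpt i Hi) as [[Hx1 Hx2] Hdl].
    assert (R1 := Rg i ltac:(lia)). assert (R2 := Rg (S i) ltac:(lia)).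
    rewrite !Hf. unfold jump_at.
    destruct (Rlt_dec (s (S i)) T); destruct (Rlt_dec (s i) T); try lra.
    - replace ((al + be * xi i) * (0 - 0) - ((al + be * T) * 0 - (al + be * T) * 0)) with 0 by ring.
      rewrite Rabs_R0; lra.
    - replace ((al + be * xi i) * (1 - 0) - ((al + be * T) * 1 - (al + be * T) * 0))
        with (be * (xi i - T)) by ring.
      rewrite Rabs_mult, Rminus_0_r, Rmult_1_r.
      apply Rmult_le_compat_l; [lra|]. apply Rabs_le; lra.
    - replace ((al + be * xi i) * (1 - 1) - ((al + be * T) * 1 - (al + be * T) * 1)) with 0 by ring.
      rewrite Rabs_R0; lra. }
  rewrite H0, Hm in Est. unfold jump_at in Est.
  destruct (Rlt_dec 0 T); [|lra]. destruct (Rlt_dec T T); [lra|].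
  replace (f T * 1 - f T * 0) with (f T) in Est by ring.
  eapply Rle_lt_trans; [exact Est|].
  replace (Rabs be * d * (1 - 0)) with (Rabs be * d) by ring.
  apply scaled_eps_lt; lra.
Qed.

Lemma RS_int_of_components n f F T I :
  (forall j, (j < n)%nat -> RS_int1 (fun t => f t j) (fun t => F t j) T (I j)) ->
  RS_int n f F 0 T (rsum n I).
Proof.
  induction n as [|n IH]; intros H eps Heps.
  - exists 1; split; [lra|]. intros. unfold RS_sum. simpl. rewrite rsum_eq0 by auto.
    rewrite Rminus_0_r, Rabs_R0; lra.
  - destruct (IH (fun j Hj => H j ltac:(lia)) (eps/2) ltac:(lra)) as [d1 [Hd1 R1]].
    destruct (H n ltac:(lia) (eps/2) ltac:(lra)) as [d2 [Hd2 R2]].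
    exists (Rmin d1 d2). split; [apply Rmin_glb_lt; auto|].
    intros m s xi Hp.
    specialize (R1 m s xi (tagged_partition_weaken _ _ _ _ _ _ _ (Rmin_l d1 d2) Hp)).
    specialize (R2 m s xi (tagged_partition_weaken _ _ _ _ _ _ _ (Rmin_r d1 d2) Hp)).
    unfold RS_sum in *. simpl. rewrite rsum_plus.
    exact (Rabs_sum_lt_half _ _ _ _ _ R1 R2).
Qed.

Lemma pwl_LS_int0_exists n f (al be : nat -> R) T N g a b F0 F1 :
  (forall t j, f t j = al j + be j * t) -> T > 0 ->
  (forall i, (i < N)%nat -> 0 <= a i /\ a i <= b i /\ b i <= T) ->
  exists I, LS_int0 n f (pwl T N g a b F0 F1) T I.
Proof.
  intros Hf HT Hab.
  set (Ij := fun j => rsum N (fun i => g (S i) j *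
     ((al j * b i + be j * b i * b i / 2) - (al j * a i + be j * a i * a i / 2))) + F1 j * f T j).
  exists (rsum n (fun j => f 0 j * pwl T N g a b F0 F1 0 j) + rsum n Ij), (rsum n Ij).
  split; [|reflexivity].
  apply RS_int_of_components. intros j Hj.
  apply (RS_int1_ext _ (fun t => (F0 j + rsum N (fun i => g (S i) j * overlap (a i) (b i) t))
                                 + F1 j * jump_at T t)).
  2:{ intros t Ht. unfold pwl, jump_at. destruct (Rlt_dec t T); ring. }
  apply RS_int1_add.
  - rewrite <- (Rplus_0_l (rsum N _)).
    apply RS_int1_add; [apply RS_int1_const|].
    apply RS_int1_rsum. intros i Hi. apply RS_int1_scal. destruct (Hab i Hi) as [? [? ?]].
    apply (RS_int1_overlap _ (al j) (be j)); auto.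
  - apply RS_int1_scal, (RS_int1_jump (fun t => f t j) (al j) (be j)); auto.
Qed.

(** * Weak duality *)

Section Duality.
Variables (K J : nat) (A : nat -> nat -> R) (beta b gamma c : nat -> R) (T : R)
  (U P : R -> nat -> R).

Definition primal_integrand (t : R) (j : nat) : R := gamma j + (T - t) * c j.
Definition dual_integrand (t : R) (k : nat) : R := beta k + (T - t) * b k.

Definition xslack (t : R) (k : nat) : R := beta k + b k * t - rsum J (fun j => A k j * U t j).

(* The dual state [q] in primal time: [qslack t = q (T - t)]. *)
Definition qslack (t : R) (j : nat) : R :=
  rsum K (fun k => A k j * P (T - t) k) - (gamma j + c j * (T - t)).

Definition primal_sum m s : R :=
  rsum J (fun j => primal_integrand 0 j * U 0 j) + RS_sum J primal_integrand U m s (fun i => s (S i)).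

Definition dual_sum m s : R :=
  rsum K (fun k => dual_integrand 0 k * P 0 k) +
  RS_sum K dual_integrand P m (fun l => T - s (m - l)%nat) (fun l => T - s (m - S l)%nat).

Definition gap_qU m s : R :=
  rsum J (fun j => qslack 0 j * U 0 j) +
  rsum m (fun i => rsum J (fun j => qslack (s (S i)) j * (U (s (S i)) j - U (s i) j))).

Definition gap_xP m (s : nat -> R) : R :=
  rsum K (fun k => rsum m (fun i => (P (T - s i) k - P (T - s (S i)) k) * xslack (s i) k)
                   + P (T - s m) k * xslack (s m) k).

Lemma primal_sum_plus_gap m s : s 0%nat = 0 ->
  primal_sum m s + gap_qU m s =
  rsum K (fun k => P (T - s 0%nat) k * rsum J (fun j => A k j * U (s 0%nat) j) +
    rsum m (fun i => P (T - s (S i)) k *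
      (rsum J (fun j => A k j * U (s (S i)) j) - rsum J (fun j => A k j * U (s i) j)))).
Proof.
  intros H0. unfold primal_sum, gap_qU, RS_sum.
  assert (E0 : rsum J (fun j => primal_integrand 0 j * U 0 j) + rsum J (fun j => qslack 0 j * U 0 j)
     = rsum K (fun k => P (T - s 0%nat) k * rsum J (fun j => A k j * U (s 0%nat) j))).
  { rewrite <- rsum_plus, H0, <- rsum_bilinear.
    apply rsum_ext; intros; unfold qslack, primal_integrand; ring. }
  assert (Ei : forall i,
     rsum J (fun j => primal_integrand (s (S i)) j * (U (s (S i)) j - U (s i) j)) +
     rsum J (fun j => qslack (s (S i)) j * (U (s (S i)) j - U (s i) j)) =
     rsum K (fun k => P (T - s (S i)) k *
       (rsum J (fun j => A k j * U (s (S i)) j) - rsum J (fun j => A k j * U (s i) j)))).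
  { intros i. rewrite <- rsum_plus.
    rewrite (rsum_ext J _ (fun j => rsum K (fun k => A k j * P (T - s (S i)) k) *
        (U (s (S i)) j - U (s i) j))) by (intros; unfold qslack, primal_integrand; ring).
    rewrite rsum_bilinear. apply rsum_ext; intros. rewrite <- rsum_minus.
    f_equal. apply rsum_ext; intros; ring. }
  rewrite rsum_plus, (rsum_swap K m), <- E0.
  rewrite (rsum_ext m _ _ (fun i _ => eq_sym (Ei i))), rsum_plus. ring.
Qed.

Lemma dual_sum_reversed m s : s m = T ->
  dual_sum m s = rsum K (fun k =>
    rsum m (fun i => (P (T - s i) k - P (T - s (S i)) k) * dual_integrand (T - s i) k) +
    P (T - s m) k * dual_integrand (T - s m) k).
Proof.
  intros Hm. unfold dual_sum, RS_sum. rewrite rsum_swap, <- rsum_plus.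
  apply rsum_ext; intros k Hk.
  rewrite <- (rsum_rev m (fun i => (P (T - s i) k - P (T - s (S i)) k) * dual_integrand (T - s i) k)).
  rewrite (rsum_ext m (fun l => (P (T - s (m - S l)%nat) k - P (T - s (S (m - S l))) k) *
      dual_integrand (T - s (m - S l)%nat) k)
    (fun l => dual_integrand (T - s (m - S l)%nat) k *
      (P (T - s (m - S l)%nat) k - P (T - s (m - l)%nat) k))).
  - rewrite Hm, Rminus_diag. ring.
  - intros l Hl. replace (S (m - S l)) with (m - l)%nat by lia. ring.
Qed.

(* Summation by parts, coordinatewise in [k], moves the increments of [U]
   onto [P]; the slacks [x] and [q] collect the difference. *)
Lemma riemann_sum_duality m s : s 0%nat = 0 -> s m = T ->
  primal_sum m s + gap_qU m s + gap_xP m s = dual_sum m s.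
Proof.
  intros H0 Hm. rewrite primal_sum_plus_gap, dual_sum_reversed by auto.
  unfold gap_xP. rewrite <- rsum_plus. apply rsum_ext; intros k Hk.
  set (AU := fun i => rsum J (fun j => A k j * U (s i) j)).
  pose proof (summation_by_parts m (fun i => P (T - s i) k) AU) as Hparts.
  cbv beta in Hparts. unfold AU in Hparts. rewrite Hparts. fold AU.
  transitivity (rsum m (fun i => (P (T - s i) k - P (T - s (S i)) k) * (AU i + xslack (s i) k)) +
                P (T - s m) k * (AU m + xslack (s m) k)).
  { rewrite (rsum_ext m
      (fun i => (P (T - s i) k - P (T - s (S i)) k) * (AU i + xslack (s i) k))
      (fun i => (P (T - s i) k - P (T - s (S i)) k) * AU i +
                                   (P (T - s i) k - P (T - s (S i)) k) * xslack (s i) k))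
      by (intros; ring).
    rewrite rsum_plus. unfold AU. ring. }
  f_equal; [apply rsum_ext; intros i Hi; f_equal|];
    unfold AU, xslack, dual_integrand; ring.
Qed.

Lemma gap_nonneg m s d :
  MCLP_feasible K J A beta b T U -> MCLPd_feasible K J A gamma c T P ->
  tagged_partition 0 T m s (fun i => s (S i)) d ->
  0 <= gap_qU m s /\ 0 <= gap_xP m s.
Proof.
  intros [Un [Ud [_ Uc]]] [Pn [Pd [_ Pc]]] Hp.
  pose proof (partition_range _ _ _ _ _ Hp) as Rg.
  pose proof (partition_mono _ _ _ _ _ _ Hp) as Mono.
  assert (0 <= T) by (destruct (Rg 0%nat ltac:(lia)); lra).
  assert (Hq : forall t j, 0 <= t <= T -> (j < J)%nat -> 0 <= qslack t j).
  { intros t j Ht Hj. unfold qslack. specialize (Pc (T - t) j ltac:(lra) Hj). lra. }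
  assert (Hx : forall t k, 0 <= t <= T -> (k < K)%nat -> 0 <= xslack t k).
  { intros t k Ht Hk. unfold xslack. specialize (Uc t k Ht Hk). lra. }
  split.
  - unfold gap_qU. apply Rplus_le_le_0_compat.
    + apply rsum_nonneg; intros j Hj. apply Rmult_le_pos; [apply Hq; auto; lra| apply Un; auto; lra].
    + apply rsum_nonneg; intros i Hi. apply rsum_nonneg; intros j Hj.
      assert (R1 := Rg i ltac:(lia)). assert (R2 := Rg (S i) ltac:(lia)).
      assert (s i <= s (S i)) by (apply Mono; lia).
      apply Rmult_le_pos; [apply Hq; auto|].
      specialize (Ud (s i) (s (S i)) j ltac:(lra) ltac:(lra) ltac:(lra) Hj). lra.
  - unfold gap_xP. apply rsum_nonneg; intros k Hk. apply Rplus_le_le_0_compat.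
    + apply rsum_nonneg; intros i Hi.
      assert (R1 := Rg i ltac:(lia)). assert (R2 := Rg (S i) ltac:(lia)).
      assert (s i <= s (S i)) by (apply Mono; lia).
      apply Rmult_le_pos; [|apply Hx; auto].
      specialize (Pd (T - s (S i)) (T - s i) k ltac:(lra) ltac:(lra) ltac:(lra) Hk). lra.
    + assert (R1 := Rg m ltac:(lia)). apply Rmult_le_pos; [apply Pn; auto; lra| apply Hx; auto].
Qed.

Lemma values_near_gap IU IP :
  MCLP_value J gamma c T U IU -> MCLPd_value K beta b T P IP ->
  forall eps, eps > 0 -> exists d, d > 0 /\
    forall m s, tagged_partition 0 T m s (fun i => s (S i)) d ->
      Rabs (IP - IU - (gap_qU m s + gap_xP m s)) < eps.
Proof.
  intros [I0U [RU EU]] [I0P [RP EP]] eps Heps.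
  destruct (RU (eps / 2) ltac:(lra)) as [d1 [Hd1 S1]].
  destruct (RP (eps / 2) ltac:(lra)) as [d2 [Hd2 S2]].
  exists (Rmin d1 d2). split; [apply Rmin_glb_lt; auto|]. intros m s Hp.
  specialize (S1 m s _ (tagged_partition_weaken _ _ _ _ _ _ _ (Rmin_l d1 d2) Hp)).
  specialize (S2 m _ _ (reverse_partition _ _ _ _
                          (tagged_partition_weaken _ _ _ _ _ _ _ (Rmin_r d1 d2) Hp))).
  destruct Hp as [H0 [Hm _]].
  pose proof (riemann_sum_duality m s H0 Hm) as Hdual.
  unfold primal_sum, dual_sum, primal_integrand, dual_integrand in Hdual.
  apply Rabs_def2 in S1. apply Rabs_def2 in S2. apply Rabs_def1; lra.
Qed.

Lemma weak_duality IU IP : T > 0 ->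
  MCLP_feasible K J A beta b T U -> MCLPd_feasible K J A gamma c T P ->
  MCLP_value J gamma c T U IU -> MCLPd_value K beta b T P IP -> IU <= IP.
Proof.
  intros HT HU HP HIU HIP. apply Rle_plus_epsilon. intros eps Heps.
  destruct (values_near_gap IU IP HIU HIP eps Heps) as [d [Hd Hnear]].
  destruct (uniform_partition T d HT Hd) as [m [s Hp]].
  destruct (gap_nonneg m s d HU HP Hp).
  specialize (Hnear m s Hp). apply Rabs_def2 in Hnear. lra.
Qed.

Lemma dual_value_le_of_vanishing_gaps IU IP :
  MCLP_value J gamma c T U IU -> MCLPd_value K beta b T P IP ->
  (forall d, d > 0 -> exists m s, tagged_partition 0 T m s (fun i => s (S i)) d /\
     gap_qU m s = 0 /\ gap_xP m s = 0) ->
  IP <= IU.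
Proof.
  intros HIU HIP Hgaps. apply Rle_plus_epsilon. intros eps Heps.
  destruct (values_near_gap IU IP HIU HIP eps Heps) as [d [Hd Hnear]].
  destruct (Hgaps d Hd) as [m [s [Hp [G1 G2]]]].
  specialize (Hnear m s Hp). rewrite G1, G2 in Hnear. apply Rabs_def2 in Hnear. lra.
Qed.

End Duality.

Lemma optimal_of_no_duality_gap K J A beta b gamma c T U P IU IP : T > 0 ->
  MCLP_feasible K J A beta b T U -> MCLPd_feasible K J A gamma c T P ->
  MCLP_value J gamma c T U IU -> MCLPd_value K beta b T P IP -> IP <= IU ->
  MCLP_optimal K J A beta b gamma c T U /\ MCLPd_optimal K J A beta b gamma c T P.
Proof.
  intros HT HU HP HIU HIP Hle. split; split; auto.
  - exists IU. split; auto. intros U' I' HU' HI'.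
    pose proof (weak_duality K J A beta b gamma c T U' P I' IP HT HU' HP HI' HIP). lra.
  - exists IP. split; auto. intros P' I' HP' HI'.
    pose proof (weak_duality K J A beta b gamma c T U P' IU I' HT HU HP' HIU HI'). lra.
Qed.

(** * The constructed solutions *)

Lemma pivot_leaving_unique K J Ks1 Js1 Ks2 Js2 v y :
  pivot K J Ks1 Js1 Ks2 Js2 v -> in_range K J y ->
  is_basic K J Ks1 Js1 y -> ~ is_basic K J Ks2 Js2 y -> y = v.
Proof.
  intros [_ [_ [w [_ [Hw1 [_ Hsame]]]]]] Hy H1 H2.
  destruct (classic (y = v)) as [|Hyv]; auto.
  destruct (classic (y = w)) as [->|Hyw]; [contradiction|].
  exfalso. apply H2, (Hsame y Hy Hyv Hyw), H1.
Qed.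

Lemma affine_nonneg_between x0 d w t :
  0 <= x0 -> 0 <= x0 + d * w -> 0 <= t <= w -> 0 <= x0 + d * t.
Proof.
  intros H1 H2 [H3 H4]. destruct (Rle_lt_dec 0 d).
  - assert (0 <= d * t) by (apply Rmult_le_pos; auto). lra.
  - assert (0 <= (- d) * (w - t)) by (apply Rmult_le_pos; lra). nra.
Qed.

Section Construction.
Context {K J : nat} {A : nat -> nat -> R} {beta b gamma c : nat -> R} {T : R}
  {N : nat} {Ks Js : nat -> nat -> bool} {u xd p qd : nat -> nat -> R}
  {v : nat -> pvar} {K0 J0 KN1 JN1 : nat -> bool}
  {U0 UN x0 XN P0 PN qN Q0 tau : nat -> R}.
Hypothesis HT : T > 0.
Hypothesis Hbs : base_sequence K J A b c N Ks Js u xd p qd v K0 J0 KN1 JN1.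
Hypothesis Hsys : bs_system K J A beta gamma T N xd qd v K0 J0 KN1 JN1 U0 UN x0 XN P0 PN qN Q0 tau.
Hypothesis Htau : forall n, (1 <= n <= N)%nat -> 0 <= tau n.

Notation Ucon := (Ucons T N u tau U0 UN).
Notation Pcon := (Pcons T N p tau PN P0).
Notation x_traj := (xslack J A beta b Ucon).
Notation q_traj := (qslack K A gamma c T Pcon).

Lemma N_ge1 : (1 <= N)%nat.
Proof. apply Hbs. Qed.

Lemma tpt_N : tpt tau N = T.
Proof. apply Hsys. Qed.

Lemma tpt_S n : tpt tau (S n) = tpt tau n + tau (S n).
Proof. reflexivity. Qed.

Lemma tpt_pred n : (1 <= n)%nat -> tpt tau n = tpt tau (n - 1) + tau n.
Proof. intros Hn. replace n with (S (n - 1)) at 1 3 by lia. reflexivity. Qed.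

Lemma tpt_mono i j : (i <= j <= N)%nat -> tpt tau i <= tpt tau j.
Proof.
  intros [Hij HjN]. induction j as [|j IH].
  - replace i with 0%nat by lia. lra.
  - destruct (Nat.eq_dec i (S j)) as [->|]; [lra|].
    rewrite tpt_S. assert (tpt tau i <= tpt tau j) by (apply IH; lia).
    assert (0 <= tau (S j)) by (apply Htau; lia). lra.
Qed.

Lemma tpt_range i : (i <= N)%nat -> 0 <= tpt tau i <= T.
Proof.
  intros Hi. split.
  - change 0 with (tpt tau 0). apply tpt_mono; lia.
  - rewrite <- tpt_N. apply tpt_mono; lia.
Qed.

Lemma tpt_tail n : (n <= N)%nat -> tpt tau n + rsum (N - n) (fun i => tau (S n + i)%nat) = T.
Proof.
  intros Hn. rewrite <- tpt_N. unfold tpt.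
  replace N with (n + (N - n))%nat at 2 by lia.
  rewrite rsum_split. reflexivity.
Qed.

Lemma breakpoint_interval t : 0 <= t <= T ->
  exists n, (1 <= n <= N)%nat /\ tpt tau (n - 1) <= t <= tpt tau n.
Proof.
  intros Ht.
  assert (G : forall M, (1 <= M <= N)%nat -> t <= tpt tau M ->
     exists n, (1 <= n <= M)%nat /\ tpt tau (n - 1) <= t <= tpt tau n).
  { induction M as [|M IH]; intros HM Hle; [lia|].
    destruct (Nat.eq_dec M 0) as [->|HM0].
    - exists 1%nat. split; [lia|]. simpl (1 - 1)%nat. split; [apply Ht|exact Hle].
    - destruct (Rle_dec t (tpt tau M)) as [Hl|Hl].
      + destruct (IH ltac:(lia) Hl) as [n [Hn1 Hn2]]. exists n; split; auto; lia.
      + exists (S M). simpl (S M - 1)%nat. rewrite Nat.sub_0_r. split; [lia|]. lra. }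
  destruct (G N) as [n [Hn1 Hn2]]; [pose proof N_ge1; lia| rewrite tpt_N; lra|].
  exists n; split; auto.
Qed.

Lemma primal_overlaps_on_interval (g : nat -> R) n t :
  (1 <= n <= N)%nat -> tpt tau (n - 1) <= t <= tpt tau n ->
  rsum N (fun i => g (S i) * overlap (tpt tau i) (tpt tau (S i)) t) =
  rsum (n - 1) (fun i => g (S i) * tau (S i)) + g n * (t - tpt tau (n - 1)).
Proof.
  intros Hn Ht.
  replace N with ((n - 1) + S (N - n))%nat at 1 by lia.
  rewrite rsum_split, rsum_Sl.
  rewrite (rsum_ext (n - 1) _ (fun i => g (S i) * tau (S i))).
  2:{ intros i Hi. rewrite overlap_full, tpt_S; [ring| |].
      - split; [apply tpt_range; lia| apply tpt_mono; lia].
      - eapply Rle_trans; [|apply Ht]. apply tpt_mono; lia. }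
  rewrite (rsum_eq0 (N - n)).
  2:{ intros i Hi. rewrite overlap_empty; [ring| apply tpt_range; lia|].
      eapply Rle_trans; [apply Ht|]. apply tpt_mono; lia. }
  rewrite Nat.add_0_r. replace (S (n - 1)) with n by lia.
  rewrite overlap_partial; [ring| apply tpt_range; lia| lra].
Qed.

Lemma dual_overlaps_on_interval (g : nat -> R) n t :
  (1 <= n <= N)%nat -> tpt tau (n - 1) <= t <= tpt tau n ->
  rsum N (fun i => g (S i) * overlap (T - tpt tau (S i)) (T - tpt tau i) (T - t)) =
  rsum (N - n) (fun i => g (S n + i)%nat * tau (S n + i)%nat) + g n * (tpt tau n - t).
Proof.
  intros Hn Ht.
  replace N with ((n - 1) + S (N - n))%nat at 1 by lia.
  rewrite rsum_split, rsum_Sl.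
  rewrite (rsum_eq0 (n - 1)).
  2:{ intros i Hi.
      assert (tpt tau (S i) <= T) by (apply tpt_range; lia).
      assert (tpt tau (S i) <= tpt tau (n - 1)) by (apply tpt_mono; lia).
      rewrite overlap_empty; [ring| lra| lra]. }
  rewrite (rsum_ext (N - n) _ (fun i => g (S n + i)%nat * tau (S n + i)%nat)).
  2:{ intros i Hi. replace (n - 1 + S i)%nat with (n + i)%nat by lia.
      assert (tpt tau (S (n + i)) <= T) by (apply tpt_range; lia).
      assert (tpt tau (n + i) <= tpt tau (S (n + i))) by (apply tpt_mono; lia).
      assert (tpt tau n <= tpt tau (n + i)) by (apply tpt_mono; lia).
      rewrite overlap_full by lra. replace (S n + i)%nat with (S (n + i)) by lia.
      rewrite tpt_S. ring. }
  rewrite Nat.add_0_r. replace (S (n - 1)) with n by lia.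
  assert (tpt tau n <= T) by (apply tpt_range; lia).
  rewrite overlap_partial by lra. ring.
Qed.

Lemma Ucons_on_interval n t j : (1 <= n <= N)%nat -> tpt tau (n - 1) <= t <= tpt tau n ->
  Ucon t j = U0 j + rsum (n - 1) (fun i => u (S i) j * tau (S i)) +
    u n j * (t - tpt tau (n - 1)) + (if Rlt_dec t T then 0 else UN j).
Proof.
  intros Hn Ht. unfold Ucons.
  rewrite (primal_overlaps_on_interval (fun i => u i j) n t Hn Ht). ring.
Qed.

Lemma Pcons_on_interval n t k : (1 <= n <= N)%nat -> tpt tau (n - 1) <= t <= tpt tau n ->
  Pcon (T - t) k = PN k + rsum (N - n) (fun i => p (S n + i)%nat k * tau (S n + i)%nat) +
    p n k * (tpt tau n - t) + (if Rlt_dec (T - t) T then 0 else P0 k).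
Proof.
  intros Hn Ht. unfold Pcons.
  rewrite (dual_overlaps_on_interval (fun i => p i k) n t Hn Ht). ring.
Qed.

Lemma basis_solutions n : (1 <= n <= N)%nat ->
  primal_basic_sol K J A b (Ks n) (Js n) (u n) (xd n) /\
  dual_basic_sol K J A c (Ks n) (Js n) (p n) (qd n) /\ admissible K J (u n) (p n).
Proof. intros Hn. destruct Hbs as [_ [H _]]. apply H, Hn. Qed.

Lemma primal_rates n k : (1 <= n <= N)%nat -> (k < K)%nat ->
  rsum J (fun j => A k j * u n j) + xd n k = b k.
Proof. intros Hn. apply (basis_solutions n Hn). Qed.

Lemma dual_rates n j : (1 <= n <= N)%nat -> (j < J)%nat ->
  rsum K (fun k => A k j * p n k) - qd n j = c j.
Proof. intros Hn. apply (basis_solutions n Hn). Qed.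

Lemma u_nonbasic_eq0 n j : (1 <= n <= N)%nat -> (j < J)%nat -> Js n j = true -> u n j = 0.
Proof. intros Hn. apply (basis_solutions n Hn). Qed.

Lemma xd_nonbasic_eq0 n k : (1 <= n <= N)%nat -> (k < K)%nat -> Ks n k = false -> xd n k = 0.
Proof. intros Hn. apply (basis_solutions n Hn). Qed.

Lemma p_nonbasic_eq0 n k : (1 <= n <= N)%nat -> (k < K)%nat -> Ks n k = true -> p n k = 0.
Proof. intros Hn. apply (basis_solutions n Hn). Qed.

Lemma qd_nonbasic_eq0 n j : (1 <= n <= N)%nat -> (j < J)%nat -> Js n j = false -> qd n j = 0.
Proof. intros Hn. apply (basis_solutions n Hn). Qed.

Lemma u_ge0 n j : (1 <= n <= N)%nat -> (j < J)%nat -> 0 <= u n j.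
Proof. intros Hn. apply (basis_solutions n Hn). Qed.

Lemma p_ge0 n k : (1 <= n <= N)%nat -> (k < K)%nat -> 0 <= p n k.
Proof. intros Hn. apply (basis_solutions n Hn). Qed.

Lemma A_Ucons t k : (k < K)%nat ->
  rsum J (fun j => A k j * Ucon t j) =
  (beta k - x0 k) + rsum N (fun i => (b k - xd (S i) k) * overlap (tpt tau i) (tpt tau (S i)) t) +
  (if Rlt_dec t T then 0 else rsum J (fun j => A k j * UN j)).
Proof.
  intros Hk. unfold Ucons.
  rewrite (rsum_ext J _ (fun j => A k j * U0 j +
      rsum N (fun i => A k j * u (S i) j * overlap (tpt tau i) (tpt tau (S i)) t) +
      (if Rlt_dec t T then 0 else A k j * UN j))).
  2:{ intros j Hj.
      rewrite (rsum_ext N (fun i => A k j * u (S i) j * overlap (tpt tau i) (tpt tau (S i)) t)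
        (fun i => A k j * (u (S i) j * overlap (tpt tau i) (tpt tau (S i)) t))) by (intros; ring).
      rewrite rsum_scal. destruct (Rlt_dec t T); ring. }
  rewrite !rsum_plus, rsum_swap.
  rewrite (rsum_ext N _ (fun i => (b k - xd (S i) k) * overlap (tpt tau i) (tpt tau (S i)) t)).
  2:{ intros i Hi.
      rewrite (rsum_ext J _ (fun j => overlap (tpt tau i) (tpt tau (S i)) t * (A k j * u (S i) j)))
        by (intros; ring).
      rewrite rsum_scal, <- (primal_rates (S i) k ltac:(pose proof N_ge1; lia) Hk). ring. }
  destruct Hsys as (_ & _ & _ & _ & _ & _ & _ & _ & _ & _ & Hd1 & _).
  specialize (Hd1 k Hk).
  assert (Ejump : rsum J (fun j => if Rlt_dec t T then 0 else A k j * UN j) =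
                  if Rlt_dec t T then 0 else rsum J (fun j => A k j * UN j))
    by (destruct (Rlt_dec t T); [apply rsum_eq0|]; auto).
  rewrite Ejump. lra.
Qed.

Lemma A_Pcons s j : (j < J)%nat ->
  rsum K (fun k => A k j * Pcon s k) =
  (gamma j + qN j) +
  rsum N (fun i => (c j + qd (S i) j) * overlap (T - tpt tau (S i)) (T - tpt tau i) s) +
  (if Rlt_dec s T then 0 else rsum K (fun k => A k j * P0 k)).
Proof.
  intros Hj. unfold Pcons.
  rewrite (rsum_ext K _ (fun k => A k j * PN k +
      rsum N (fun i => A k j * p (S i) k * overlap (T - tpt tau (S i)) (T - tpt tau i) s) +
      (if Rlt_dec s T then 0 else A k j * P0 k))).
  2:{ intros k Hk.
      rewrite (rsum_ext N (fun i => A k j * p (S i) k * overlap (T - tpt tau (S i)) (T - tpt tau i) s)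
        (fun i => A k j * (p (S i) k * overlap (T - tpt tau (S i)) (T - tpt tau i) s)))
        by (intros; ring).
      rewrite rsum_scal. destruct (Rlt_dec s T); ring. }
  rewrite !rsum_plus, rsum_swap.
  rewrite (rsum_ext N _ (fun i => (c j + qd (S i) j) * overlap (T - tpt tau (S i)) (T - tpt tau i) s)).
  2:{ intros i Hi.
      rewrite (rsum_ext K _ (fun k => overlap (T - tpt tau (S i)) (T - tpt tau i) s * (A k j * p (S i) k)))
        by (intros; ring).
      rewrite rsum_scal, <- (dual_rates (S i) j ltac:(pose proof N_ge1; lia) Hj). ring. }
  destruct Hsys as (_ & _ & _ & _ & _ & _ & _ & _ & _ & _ & _ & Hd2 & _).
  specialize (Hd2 j Hj).
  assert (Ejump : rsum K (fun k => if Rlt_dec s T then 0 else A k j * P0 k) =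
                  if Rlt_dec s T then 0 else rsum K (fun k => A k j * P0 k))
    by (destruct (Rlt_dec s T); [apply rsum_eq0|]; auto).
  rewrite Ejump. lra.
Qed.

Lemma x_traj_on_interval n t k : (1 <= n <= N)%nat -> tpt tau (n - 1) <= t <= tpt tau n ->
  (k < K)%nat ->
  x_traj t k = xstate x0 xd tau (n - 1) k + xd n k * (t - tpt tau (n - 1)) -
    (if Rlt_dec t T then 0 else rsum J (fun j => A k j * UN j)).
Proof.
  intros Hn Ht Hk. unfold xslack. rewrite (A_Ucons t k Hk).
  rewrite (rsum_ext N _ (fun i => b k * (1 * overlap (tpt tau i) (tpt tau (S i)) t) -
                                  xd (S i) k * overlap (tpt tau i) (tpt tau (S i)) t))
    by (intros; ring).
  rewrite rsum_minus, rsum_scal.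
  rewrite (primal_overlaps_on_interval (fun _ => 1) n t Hn Ht).
  rewrite (primal_overlaps_on_interval (fun i => xd i k) n t Hn Ht).
  rewrite (rsum_ext (n - 1) (fun i => 1 * tau (S i)) (fun i => tau (S i))) by (intros; ring).
  unfold xstate, tpt. lra.
Qed.

Lemma q_traj_on_interval n t j : (1 <= n <= N)%nat -> tpt tau (n - 1) <= t <= tpt tau n ->
  (j < J)%nat ->
  q_traj t j = qstate N qN qd tau n j + qd n j * (tpt tau n - t) +
    (if Rlt_dec (T - t) T then 0 else rsum K (fun k => A k j * P0 k)).
Proof.
  intros Hn Ht Hj. unfold qslack. rewrite (A_Pcons (T - t) j Hj).
  rewrite (rsum_ext N _ (fun i => c j * (1 * overlap (T - tpt tau (S i)) (T - tpt tau i) (T - t)) +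
                                  qd (S i) j * overlap (T - tpt tau (S i)) (T - tpt tau i) (T - t)))
    by (intros; ring).
  rewrite rsum_plus, rsum_scal.
  rewrite (dual_overlaps_on_interval (fun _ => 1) n t Hn Ht).
  rewrite (dual_overlaps_on_interval (fun i => qd i j) n t Hn Ht).
  rewrite (rsum_ext (N - n) (fun i => 1 * tau (S n + i)%nat) (fun i => tau (S n + i)%nat))
    by (intros; ring).
  replace (rsum (N - n) (fun i => tau (S n + i)%nat) + 1 * (tpt tau n - t)) with (T - t)
    by (pose proof (tpt_tail n ltac:(lia)); lra).
  unfold qstate. lra.
Qed.

Lemma xstate_step n k : (1 <= n)%nat ->
  xstate x0 xd tau n k = xstate x0 xd tau (n - 1) k + xd n k * tau n.
Proof. intros Hn. unfold xstate. replace n with (S (n - 1)) at 1 3 4 by lia. simpl. ring. Qed.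

Lemma qstate_step n j : (1 <= n <= N)%nat ->
  qstate N qN qd tau (n - 1) j = qstate N qN qd tau n j + qd n j * tau n.
Proof.
  intros Hn. unfold qstate. replace (N - (n - 1))%nat with (S (N - n)) by lia.
  rewrite rsum_Sl, Nat.add_0_r. replace (S (n - 1)) with n by lia.
  rewrite (rsum_ext (N - n) (fun i => qd (n + S i)%nat j * tau (n + S i)%nat)
     (fun i => qd (S n + i)%nat j * tau (S n + i)%nat))
    by (intros; replace (n + S i)%nat with (S n + i)%nat by lia; reflexivity).
  ring.
Qed.

(* If [xd_k] is nonbasic in [B_n], then either it was nonbasic in [B_(n-1)]
   as well (and [x_k] did not move during interval [n-1]), or it left the
   basis at pivot [n-1], where equation (a) makes [x_k] vanish. *)
Lemma xstate_eq0_of_xd_nonbasic n k : (1 <= n <= N)%nat -> (k < K)%nat ->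
  Ks n k = false -> xstate x0 xd tau (n - 1) k = 0.
Proof.
  destruct Hsys as (Hbreak & _ & _ & Hx0 & _).
  destruct Hbs as (_ & _ & Hpiv & HK0 & _).
  induction n as [|n IH]; intros Hn Hk HKs; [lia|].
  simpl (S n - 1)%nat. rewrite Nat.sub_0_r.
  destruct (Nat.eq_dec n 0) as [->|Hn0].
  - unfold xstate. simpl. rewrite Rplus_0_r. apply Hx0; auto.
    destruct (K0 k) eqn:E; auto. rewrite (HK0 k Hk E) in HKs. discriminate.
  - destruct (Ks n k) eqn:E.
    + assert (Hv : VX k = v n).
      { apply (pivot_leaving_unique K J (Ks n) (Js n) (Ks (S n)) (Js (S n))); simpl; auto.
        - apply Hpiv; lia.
        - intros [_ H]. rewrite H in HKs; discriminate. }
      apply (Hbreak n ltac:(lia)); auto.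
    + rewrite xstate_step, (IH ltac:(lia) Hk eq_refl), (xd_nonbasic_eq0 n k ltac:(lia) Hk E) by lia.
      ring.
Qed.

(* The time-reversed counterpart for [q], by downward induction from [N]. *)
Lemma qstate_eq0_of_u_basic n j : (1 <= n <= N)%nat -> (j < J)%nat ->
  Js n j = false -> qstate N qN qd tau n j = 0.
Proof.
  destruct Hsys as (Hbreak & _ & _ & _ & _ & _ & _ & HqN & _).
  destruct Hbs as (_ & _ & Hpiv & _ & HJN).
  intros Hn Hj. remember (N - n)%nat as d eqn:Hd. revert n Hn Hd.
  induction d as [|d IH]; intros n Hn Hd HJs.
  - replace n with N by lia. unfold qstate. rewrite Nat.sub_diag. simpl. rewrite Rplus_0_r.
    apply HqN; auto. destruct (JN1 j) eqn:E; auto.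
    replace N with n in HJN by lia. rewrite (HJN j Hj E) in HJs; discriminate.
  - replace (qstate N qN qd tau n j) with (qstate N qN qd tau (S n - 1) j)
      by (f_equal; lia).
    rewrite qstate_step by lia.
    destruct (Js (S n) j) eqn:E.
    + assert (Hv : VU j = v n).
      { apply (pivot_leaving_unique K J (Ks n) (Js n) (Ks (S n)) (Js (S n))); simpl; auto.
        - apply Hpiv; lia.
        - intros [_ H]. rewrite H in E; discriminate. }
      rewrite <- qstate_step by lia. simpl (S n - 1)%nat. rewrite Nat.sub_0_r.
      apply (Hbreak n ltac:(lia)); auto.
    + rewrite (IH (S n) ltac:(lia) ltac:(lia) E), (qd_nonbasic_eq0 (S n) j ltac:(lia) Hj E). ring.
Qed.

Lemma first_interval_0 : tpt tau (1 - 1) <= 0 <= tpt tau 1.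
Proof. split; [apply Rle_refl| apply tpt_range; pose proof N_ge1; lia]. Qed.

Lemma last_interval_T : tpt tau (N - 1) <= T <= tpt tau N.
Proof. rewrite tpt_N. split; [apply tpt_range; lia| lra]. Qed.

Lemma x_traj_0 k : (k < K)%nat -> x_traj 0 k = x0 k.
Proof.
  intros Hk. pose proof N_ge1.
  rewrite (x_traj_on_interval 1 0 k ltac:(lia) first_interval_0 Hk).
  destruct (Rlt_dec 0 T); [|lra]. unfold xstate, tpt. simpl. ring.
Qed.

Lemma x_traj_T k : (k < K)%nat -> x_traj T k = XN k.
Proof.
  intros Hk. pose proof N_ge1.
  rewrite (x_traj_on_interval N T k ltac:(lia) last_interval_T Hk).
  destruct (Rlt_dec T T); [lra|].
  destruct Hsys as (_ & _ & _ & _ & _ & _ & _ & _ & _ & _ & _ & _ & He1 & _).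
  specialize (He1 k Hk). rewrite xstate_step in He1 by lia.
  pose proof (tpt_pred N ltac:(lia)). rewrite tpt_N in *.
  replace (T - tpt tau (N - 1)) with (tau N) by lra. lra.
Qed.

Lemma q_traj_0 j : (j < J)%nat -> q_traj 0 j = Q0 j.
Proof.
  intros Hj. pose proof N_ge1.
  rewrite (q_traj_on_interval 1 0 j ltac:(lia) first_interval_0 Hj).
  destruct (Rlt_dec (T - 0) T); [lra|].
  destruct Hsys as (_ & _ & _ & _ & _ & _ & _ & _ & _ & _ & _ & _ & _ & He2).
  specialize (He2 j Hj). pose proof (qstate_step 1 j ltac:(lia)) as Hstep.
  unfold tpt. simpl in *. lra.
Qed.

Lemma q_traj_T j : (j < J)%nat -> q_traj T j = qN j.
Proof.
  intros Hj. pose proof N_ge1.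
  rewrite (q_traj_on_interval N T j ltac:(lia) last_interval_T Hj), tpt_N.
  destruct (Rlt_dec (T - T) T); [|lra].
  unfold qstate. rewrite Nat.sub_diag. simpl. ring.
Qed.

Lemma Ucons_0 j : Ucon 0 j = U0 j.
Proof.
  pose proof N_ge1.
  rewrite (Ucons_on_interval 1 0 j ltac:(lia) first_interval_0).
  destruct (Rlt_dec 0 T); [|lra]. unfold tpt. simpl. ring.
Qed.

Lemma Pcons_0 k : Pcon 0 k = PN k.
Proof.
  pose proof N_ge1. rewrite <- (Rminus_diag T).
  rewrite (Pcons_on_interval N T k ltac:(lia) last_interval_T), Nat.sub_diag, tpt_N.
  destruct (Rlt_dec (T - T) T); [|lra]. simpl. ring.
Qed.

Hypothesis HU : forall j, (j < J)%nat -> 0 <= U0 j /\ 0 <= UN j /\ 0 <= qN j /\ 0 <= Q0 j.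
Hypothesis HX : forall k, (k < K)%nat -> 0 <= x0 k /\ 0 <= XN k /\ 0 <= P0 k /\ 0 <= PN k.
Hypothesis Hxs : forall n k, (n <= N)%nat -> (k < K)%nat -> 0 <= xstate x0 xd tau n k.
Hypothesis Hqs : forall n j, (n <= N)%nat -> (j < J)%nat -> 0 <= qstate N qN qd tau n j.

Lemma x_traj_ge0 t k : 0 <= t <= T -> (k < K)%nat -> 0 <= x_traj t k.
Proof.
  intros Ht Hk. destruct (Rlt_dec t T) as [Hlt|Hge].
  - destruct (breakpoint_interval t Ht) as [n [Hn Hi]].
    rewrite (x_traj_on_interval n t k Hn Hi Hk). destruct (Rlt_dec t T); [|lra].
    rewrite Rminus_0_r. pose proof (tpt_pred n ltac:(lia)).
    apply (affine_nonneg_between _ _ (tau n)); [apply Hxs; lia| |lra].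
    rewrite <- xstate_step by lia. apply Hxs; lia.
  - replace t with T by lra. rewrite x_traj_T by auto. apply HX; auto.
Qed.

Lemma q_traj_ge0 t j : 0 <= t <= T -> (j < J)%nat -> 0 <= q_traj t j.
Proof.
  intros Ht Hj. destruct (Rlt_dec 0 t) as [Hlt|Hge].
  - destruct (breakpoint_interval t Ht) as [n [Hn Hi]].
    rewrite (q_traj_on_interval n t j Hn Hi Hj). destruct (Rlt_dec (T - t) T); [|lra].
    rewrite Rplus_0_r. pose proof (tpt_pred n ltac:(lia)).
    apply (affine_nonneg_between _ _ (tau n)); [apply Hqs; lia| |lra].
    rewrite <- qstate_step by lia. apply Hqs; lia.
  - replace t with 0 by lra. rewrite q_traj_0 by auto. apply HU; auto.
Qed.

Lemma Ucons_feasible : MCLP_feasible K J A beta b T Ucon.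
Proof.
  change Ucon with (pwl T N u (tpt tau) (fun i => tpt tau (S i)) U0 UN).
  split; [|split; [|split]].
  - apply pwl_nonneg; [apply u_ge0| intros j Hj; destruct (HU j Hj) as (? & ? & _); auto].
  - apply pwl_nondecr; [apply u_ge0| intros j Hj; destruct (HU j Hj) as (? & ? & _); auto].
  - apply pwl_rcont.
  - intros t k Ht Hk. pose proof (x_traj_ge0 t k Ht Hk) as H.
    unfold xslack, Ucons in H. unfold pwl. lra.
Qed.

Lemma Pcons_feasible : MCLPd_feasible K J A gamma c T Pcon.
Proof.
  change Pcon with (pwl T N p (fun i => T - tpt tau (S i)) (fun i => T - tpt tau i) PN P0).
  split; [|split; [|split]].
  - apply pwl_nonneg; [apply p_ge0| intros k Hk; destruct (HX k Hk) as (_ & _ & ? & ?); auto].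
  - apply pwl_nondecr; [apply p_ge0| intros k Hk; destruct (HX k Hk) as (_ & _ & ? & ?); auto].
  - apply pwl_rcont.
  - intros s j Hs Hj. pose proof (q_traj_ge0 (T - s) j ltac:(lra) Hj) as H.
    unfold qslack, Pcons in H. unfold pwl. replace (T - (T - s)) with s in H by ring. lra.
Qed.

Definition refines_breakpoints (m : nat) (s : nat -> R) : Prop :=
  forall i, (i < m)%nat -> exists n, (1 <= n <= N)%nat /\
    tpt tau (n - 1) <= s i /\ s i <= s (S i) /\ s (S i) <= tpt tau n.

(* Each interval [(t_q, t_(q+1))] cut into [M] equal pieces. *)
Definition grid (M i : nat) : R :=
  tpt tau (i / M) + INR (i mod M) / INR M * tau (S (i / M)).

Lemma grid_eq M q r : (r < M)%nat ->
  grid M (M * q + r) = tpt tau q + INR r / INR M * tau (S q).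
Proof.
  intros Hr. unfold grid.
  rewrite <- (Nat.div_unique _ M q r Hr eq_refl), <- (Nat.mod_unique _ M q r Hr eq_refl).
  reflexivity.
Qed.

Lemma grid_succ M i : (0 < M)%nat ->
  grid M (S i) = tpt tau (i / M) + INR (S (i mod M)) / INR M * tau (S (i / M)).
Proof.
  intros HM. pose proof (Nat.div_mod_eq i M). pose proof (Nat.mod_upper_bound i M ltac:(lia)).
  assert (HMR : 0 < INR M) by (apply lt_0_INR; lia).
  destruct (Nat.eq_dec (S (i mod M)) M) as [Heq|Hne].
  - replace (S i) with (M * S (i / M) + 0)%nat by lia.
    rewrite grid_eq, tpt_S, Heq by lia. simpl INR. field. lra.
  - replace (S i) with (M * (i / M) + S (i mod M))%nat by lia.
    apply grid_eq. lia.
Qed.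

Lemma grid_cell M i : (0 < M)%nat -> (i < N * M)%nat ->
  (1 <= S (i / M) <= N)%nat /\
  tpt tau (S (i / M) - 1) <= grid M i /\ grid M i <= grid M (S i) /\
  grid M (S i) <= tpt tau (S (i / M)) /\ grid M (S i) - grid M i <= T / INR M.
Proof.
  intros HM Hi. rewrite grid_succ by auto. unfold grid.
  pose proof (Nat.div_mod_eq i M). pose proof (Nat.mod_upper_bound i M ltac:(lia)).
  set (q := (i / M)%nat) in *. set (r := (i mod M)%nat) in *.
  assert (Hq : (q < N)%nat) by nia.
  simpl (S q - 1)%nat. rewrite Nat.sub_0_r, tpt_S, S_INR.
  assert (HMR : 0 < INR M) by (apply lt_0_INR; lia).
  assert (Htq : 0 <= tau (S q)) by (apply Htau; lia).
  assert (HtT : tau (S q) <= T).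
  { pose proof (tpt_range (S q) ltac:(lia)). pose proof (tpt_range q ltac:(lia)).
    rewrite tpt_S in *. lra. }
  assert (Hr1 : 0 <= INR r / INR M) by (apply Rmult_le_pos; [apply pos_INR| left; apply Rinv_0_lt_compat; lra]).
  assert (Hr2 : (INR r + 1) / INR M <= 1).
  { rewrite <- S_INR. apply (Rmult_le_reg_r (INR M)); [lra|].
    unfold Rdiv. rewrite Rmult_assoc, Rinv_l, Rmult_1_l, Rmult_1_r by lra. apply le_INR; lia. }
  replace ((INR r + 1) / INR M) with (INR r / INR M + / INR M) in * by (field; lra).
  assert (Hinv : 0 < / INR M) by (apply Rinv_0_lt_compat; lra).
  assert (0 <= INR r / INR M * tau (S q)) by (apply Rmult_le_pos; auto).
  assert (/ INR M * tau (S q) <= / INR M * T) by (apply Rmult_le_compat_l; lra).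
  assert (INR r / INR M * tau (S q) + / INR M * tau (S q) <= tau (S q))
    by nra.
  unfold Rdiv in *. split; [lia|]. nra.
Qed.

Lemma breakpoint_partition d : d > 0 -> exists m s,
  tagged_partition 0 T m s (fun i => s (S i)) d /\ refines_breakpoints m s.
Proof.
  intros Hd. destruct (archimed_cor1 (d / T)) as [M [HM HM0]]; [apply Rdiv_lt_0_compat; lra|].
  assert (HMR : 0 < INR M) by (apply lt_0_INR; lia).
  assert (HTM : T / INR M < d).
  { apply (Rmult_lt_reg_r (/ T)); [apply Rinv_0_lt_compat; lra|].
    replace (T / INR M * / T) with (/ INR M) by (field; lra). exact HM. }
  exists (N * M)%nat, (grid M). split; [split; [|split]|].
  - unfold grid. rewrite Nat.Div0.div_0_l, Nat.Div0.mod_0_l. unfold tpt. simpl. unfold Rdiv. ring.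
  - rewrite <- (Nat.add_0_r (N * M)), Nat.mul_comm, grid_eq, tpt_N by lia.
    simpl. unfold Rdiv. ring.
  - intros i Hi. destruct (grid_cell M i HM0 Hi) as (_ & _ & ? & _ & ?). split; [split|]; lra.
  - intros i Hi. destruct (grid_cell M i HM0 Hi) as (? & ? & ? & ? & _).
    exists (S (i / M)). auto.
Qed.

Lemma u_q_complementary n t j : (1 <= n <= N)%nat -> (j < J)%nat ->
  u n j * (qstate N qN qd tau n j + qd n j * t) = 0.
Proof.
  intros Hn Hj. destruct (Js n j) eqn:E.
  - rewrite (u_nonbasic_eq0 n j Hn Hj E). ring.
  - rewrite (qstate_eq0_of_u_basic n j Hn Hj E), (qd_nonbasic_eq0 n j Hn Hj E). ring.
Qed.

Lemma p_x_complementary n t k : (1 <= n <= N)%nat -> (k < K)%nat ->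
  p n k * (xstate x0 xd tau (n - 1) k + xd n k * t) = 0.
Proof.
  intros Hn Hk. destruct (Ks n k) eqn:E.
  - rewrite (p_nonbasic_eq0 n k Hn Hk E). ring.
  - rewrite (xstate_eq0_of_xd_nonbasic n k Hn Hk E), (xd_nonbasic_eq0 n k Hn Hk E). ring.
Qed.

Lemma boundary_complementary_J j : (j < J)%nat -> Q0 j * U0 j = 0 /\ qN j * UN j = 0.
Proof.
  intros Hj. destruct Hsys as (_ & _ & HU0 & _ & _ & HQ0 & _ & HqN & HUN & _).
  split; [destruct (J0 j) eqn:E| destruct (JN1 j) eqn:E];
    [rewrite (HU0 j Hj E)| rewrite (HQ0 j Hj E)| rewrite (HUN j Hj E)| rewrite (HqN j Hj E)]; ring.
Qed.

Lemma boundary_complementary_K k : (k < K)%nat -> P0 k * x0 k = 0 /\ PN k * XN k = 0.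
Proof.
  intros Hk. destruct Hsys as (_ & _ & _ & Hx0 & HP0 & _ & HPN & _ & _ & HXN & _).
  split; [destruct (K0 k) eqn:E| destruct (KN1 k) eqn:E];
    [rewrite (HP0 k Hk E)| rewrite (Hx0 k Hk E)| rewrite (HPN k Hk E)| rewrite (HXN k Hk E)]; ring.
Qed.

Lemma q_dU_on_interval n t1 t2 j : (1 <= n <= N)%nat ->
  tpt tau (n - 1) <= t1 <= t2 -> t2 <= tpt tau n -> (j < J)%nat ->
  q_traj t2 j * (Ucon t2 j - Ucon t1 j) = 0.
Proof.
  intros Hn Ht1 Ht2 Hj.
  destruct (Req_dec t1 t2) as [<-|Hne]; [ring|].
  assert (0 <= tpt tau (n - 1)) by (apply tpt_range; lia).
  assert (tpt tau n <= T) by (apply tpt_range; lia).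
  assert (C1 : q_traj t2 j * u n j = 0).
  { rewrite (q_traj_on_interval n t2 j Hn ltac:(lra) Hj).
    destruct (Rlt_dec (T - t2) T); [|lra].
    rewrite Rplus_0_r, Rmult_comm. apply u_q_complementary; auto. }
  rewrite (Ucons_on_interval n t2 j Hn ltac:(lra)), (Ucons_on_interval n t1 j Hn ltac:(lra)).
  destruct (Rlt_dec t1 T); [|lra].
  destruct (Rlt_dec t2 T).
  - transitivity (q_traj t2 j * u n j * (t2 - t1)); [ring|]. rewrite C1. ring.
  - replace t2 with T in * by lra.
    transitivity (q_traj T j * u n j * (T - t1) + q_traj T j * UN j); [ring|].
    rewrite C1, q_traj_T by auto. rewrite (proj2 (boundary_complementary_J j Hj)). ring.
Qed.

Lemma dP_x_on_interval n t1 t2 k : (1 <= n <= N)%nat ->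
  tpt tau (n - 1) <= t1 <= t2 -> t2 <= tpt tau n -> (k < K)%nat ->
  (Pcon (T - t1) k - Pcon (T - t2) k) * x_traj t1 k = 0.
Proof.
  intros Hn Ht1 Ht2 Hk.
  destruct (Req_dec t1 t2) as [<-|Hne]; [ring|].
  assert (0 <= tpt tau (n - 1)) by (apply tpt_range; lia).
  assert (tpt tau n <= T) by (apply tpt_range; lia).
  assert (C1 : p n k * x_traj t1 k = 0).
  { rewrite (x_traj_on_interval n t1 k Hn ltac:(lra) Hk).
    destruct (Rlt_dec t1 T); [|lra].
    rewrite Rminus_0_r. apply p_x_complementary; auto. }
  rewrite (Pcons_on_interval n t2 k Hn ltac:(lra)), (Pcons_on_interval n t1 k Hn ltac:(lra)).
  destruct (Rlt_dec (T - t2) T); [|lra].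
  destruct (Rlt_dec (T - t1) T).
  - transitivity (p n k * x_traj t1 k * (t2 - t1)); [ring|]. rewrite C1. ring.
  - replace t1 with 0 in * by lra.
    transitivity (p n k * x_traj 0 k * (t2 - 0) + P0 k * x_traj 0 k); [ring|].
    rewrite C1, x_traj_0 by auto. rewrite (proj1 (boundary_complementary_K k Hk)). ring.
Qed.

Lemma gaps_vanish m s d : tagged_partition 0 T m s (fun i => s (S i)) d ->
  refines_breakpoints m s ->
  gap_qU K J A gamma c T Ucon Pcon m s = 0 /\ gap_xP K J A beta b T Ucon Pcon m s = 0.
Proof.
  intros [_ [Hm _]] Href. split.
  - unfold gap_qU. rewrite (rsum_eq0 J), (rsum_eq0 m); [ring| |].
    + intros i Hi. apply rsum_eq0; intros j Hj.
      destruct (Href i Hi) as (n & Hn & ? & ? & ?). apply (q_dU_on_interval n); auto.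
    + intros j Hj. rewrite q_traj_0, Ucons_0 by auto. apply boundary_complementary_J, Hj.
  - unfold gap_xP. apply rsum_eq0; intros k Hk. rewrite Hm, (rsum_eq0 m).
    + rewrite Rminus_diag, Pcons_0, x_traj_T by auto.
      rewrite (proj2 (boundary_complementary_K k Hk)). ring.
    + intros i Hi. destruct (Href i Hi) as (n & Hn & ? & ? & ?).
      apply (dP_x_on_interval n); auto.
Qed.

Lemma Ucons_value_exists : exists I, MCLP_value J gamma c T Ucon I.
Proof.
  change Ucon with (pwl T N u (tpt tau) (fun i => tpt tau (S i)) U0 UN).
  apply (pwl_LS_int0_exists J _ (fun j => gamma j + T * c j) (fun j => - c j));
    [intros; ring| exact HT|].
  intros i Hi. split; [|split]; [apply tpt_range| apply tpt_mono| apply tpt_range]; lia.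
Qed.

Lemma Pcons_value_exists : exists I, MCLPd_value K beta b T Pcon I.
Proof.
  change Pcon with (pwl T N p (fun i => T - tpt tau (S i)) (fun i => T - tpt tau i) PN P0).
  apply (pwl_LS_int0_exists K _ (fun k => beta k + T * b k) (fun k => - b k));
    [intros; ring| exact HT|].
  intros i Hi. pose proof (tpt_range i ltac:(lia)). pose proof (tpt_range (S i) ltac:(lia)).
  pose proof (tpt_mono i (S i) ltac:(lia)). lra.
Qed.

Lemma constructed_dual_value_le IU IP :
  MCLP_value J gamma c T Ucon IU -> MCLPd_value K beta b T Pcon IP -> IP <= IU.
Proof.
  intros HIU HIP. apply (dual_value_le_of_vanishing_gaps K J A beta b gamma c T _ _ IU IP HIU HIP).
  intros d Hd. destruct (breakpoint_partition d Hd) as (m & s & Hp & Href).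
  exists m, s. split; [exact Hp|]. exact (gaps_vanish m s d Hp Href).
Qed.

End Construction.

Theorem mainTheorem1
  (K J : nat) (A : nat -> nat -> R) (beta b gamma c : nat -> R) (T : R)
  (N : nat) (Ks Js : nat -> nat -> bool) (u xd p qd : nat -> nat -> R)
  (v : nat -> pvar) (K0 J0 KN1 JN1 : nat -> bool)
  (U0 UN x0 XN P0 PN qN Q0 tau : nat -> R) :
  T > 0 ->
  nondegenerate_I K J A b c ->
  base_sequence K J A b c N Ks Js u xd p qd v K0 J0 KN1 JN1 ->
  bs_system K J A beta gamma T N xd qd v K0 J0 KN1 JN1 U0 UN x0 XN P0 PN qN Q0 tau ->
  (forall j, (j < J)%nat -> 0 <= U0 j /\ 0 <= UN j /\ 0 <= qN j /\ 0 <= Q0 j) ->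
  (forall k, (k < K)%nat -> 0 <= x0 k /\ 0 <= XN k /\ 0 <= P0 k /\ 0 <= PN k) ->
  (forall n, (1 <= n <= N)%nat -> 0 <= tau n) ->
  (forall n k, (n <= N)%nat -> (k < K)%nat -> 0 <= xstate x0 xd tau n k) ->
  (forall n j, (n <= N)%nat -> (j < J)%nat -> 0 <= qstate N qN qd tau n j) ->
  MCLP_optimal K J A beta b gamma c T (Ucons T N u tau U0 UN) /\
  MCLPd_optimal K J A beta b gamma c T (Pcons T N p tau PN P0).
Proof.
  intros HT _ Hbs Hsys HU HX Htau Hxs Hqs.
  destruct (Ucons_value_exists (c := c) (u := u) HT Hsys Htau) as [IU HIU].
  destruct (Pcons_value_exists (b := b) (p := p) HT Hsys Htau) as [IP HIP].
  apply (optimal_of_no_duality_gap K J A beta b gamma c T _ _ IU IP HT).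
  - exact (Ucons_feasible Hbs Hsys Htau HU HX Hxs).
  - exact (Pcons_feasible Hbs Hsys Htau HU HX Hqs).
  - exact HIU.
  - exact HIP.
  - exact (constructed_dual_value_le HT Hbs Hsys Htau IU IP HIU HIP).
Qed.
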